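(* The assignment $(P,J)\mapsto(\mathfrak I(P,J),K_{\mathfrak I(P,J)})$ extends to a 2-functor $\mathfrak I:\mathbf{DocSites}\to\mathbf{GeomDoc}$ which is a strict left 2-adjoint to the inclusion $\mathbf{GeomDoc}\hookrightarrow\mathbf{DocSites}$: on a 1-cell $(F,a)$ it is the unique morphism of geometric doctrines $(F,\mathfrak a)$ with $\mathfrak a\circ\eta^{(P,J)}=\eta^{(Q,K)}\circ a$, and every 2-cell $\alpha:(F,a)\Rightarrow(F',a')$ of $\mathbf{DocSites}$ is also a 2-cell $\alpha:(F,\mathfrak a)\Rightarrow(F',\mathfrak a')$. In particular, for every doctrinal site $(P,J)$ and geometric doctrine $\mathbb L$ there is an isomorphism of categories, natural in both variables, $$\mathrm{Hom}_{\mathbf{DocSites}}((P,J),(\mathbb L,K_{\mathbb L}))\cong\mathrm{Hom}_{\mathbf{GeomDoc}}((\mathfrak I(P,J),K_{\mathfrak I(P,J)}),(\mathbb L,K_{\mathbb L})),$$ given by precomposition with $(\mathrm{id}_{\mathcal C},\eta^{(P,J)})$.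
   Context: A doctrine is a functor $P:\mathcal C^{op}\to\mathbf{PreOrd}$ ($\mathcal C$ a small category). Its Grothendieck construction $\mathcal C\rtimes P$ has objects the pairs $(c,x)$ with $c\in\mathcal C$, $x\in P(c)$, and a morphism $f:(c,x)\to(d,y)$ for each morphism $f:c\to d$ of $\mathcal C$ with $x\le P(f)(y)$. A doctrinal site is a pair $(P,J)$ with $J$ a Grothendieck topology on $\mathcal C\rtimes P$. A functor $F:\mathcal C\to\mathcal D$ is flat if it is a morphism of sites $(\mathcal C,J_{triv})\to(\mathcal D,J_{triv})$ for the trivial topologies. The 2-category $\mathbf{DocSites}$ has doctrinal sites as objects; a 1-cell $(F,a):(P,J)\to(Q,K)$ (with $Q:\mathcal D^{op}\to\mathbf{PreOrd}$) is a flat functor $F:\mathcal C\to\mathcal D$ and a natural transformation $a:P\Rightarrow Q\circ F^{op}$ such that $F\rtimes a:\mathcal C\rtimes P\to\mathcal D\rtimes Q$, $(c,x)\mapsto(F(c),a_c(x))$, $f\mapsto F(f)$, is a morphism of sites $(\mathcal C\rtimes P,J)\to(\mathcal D\rtimes Q,K)$; a 2-cell $(F,a)\Rightarrow(F',a')$ is a natural transformation $\alpha:F\Rightarrow F'$ with $a_c(x)\le Q(\alpha_c)(a'_c(x))$ for all $c$, $x\in P(c)$. $\mathbf{Frm}_{open}$ is the category of frames and frame homomorphisms having a left adjoint satisfying Frobenius reciprocity. For $\mathbb L:\mathcal C^{op}\to\mathbf{Frm}_{open}$ and $f:d\to c$, $\exists_f$ denotes the left adjoint of $\mathbb L(f)$.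 Such $\mathbb L$ is a geometric doctrine if for every $h:e\to d$ in $\mathcal C$ and every sieve $S$ on $(d,V)$ in $\mathcal C\rtimes\mathbb L$ with $V=\bigvee_{(f:(c,U)\to(d,V))\in S}\exists_fU$, one has $\mathbb L(h)(V)=\bigvee\exists_gW$ over all $g:(c,W)\to(e,\mathbb L(h)(V))$ with $h\circ g\in S$. $K_{\mathbb L}$ is the topology on $\mathcal C\rtimes\mathbb L$ in which $\{f_i:(c_i,U_i)\to(d,V)\}_i$ covers iff $V=\bigvee_i\exists_{f_i}U_i$. $\mathbf{GeomDoc}$ is the full 2-subcategory of $\mathbf{DocSites}$ on the $(\mathbb L,K_{\mathbb L})$; its 1-cells are morphisms of geometric doctrines. Geometric completion: $\mathfrak I(P,J)(c)$ is the set, ordered by inclusion, of sets $S$ of pairs $(f,x)$ with $f:d\to c$ in $\mathcal C$, $x\in P(d)$ such that (a) if $(f,x)\in S$, $g:e\to d$, $y\in P(e)$, $y\le P(g)(x)$ then $(f\circ g,y)\in S$; (b) if $f:d\to c$, $x\in P(d)$ and there is a $J$-covering family $\{h_i:(e_i,y_i)\to(d,x)\}$ with $(f\circ h_i,y_i)\in S$ for all $i$, then $(f,x)\in S$; for $f:d\to c$, $\mathfrak I(P,J)(f)(S)=\{(g,y):(f\circ g,y)\in S\}$. The unit $\eta^{(P,J)}_c(x)$ is the smallest element of $\mathfrak I(P,J)(c)$ containing $\{(g,y):g:e\to c,\ y\le P(g)(x)\}$. $\mathfrak I(P,J)$ is a geometric doctrine, and there is a unique morphism of geometric doctrines extending any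 morphism $(P,J)\to(\mathbb L,K_{\mathbb L})$ along $\eta^{(P,J)}$. *)

From Stdlib Require Import ProofIrrelevance FunctionalExtensionality PropExtensionality.

Record Cat := {
  Ob :> Type;
  Hom : Ob -> Ob -> Type;
  idm : forall a, Hom a a;
  cmp : forall a b c, Hom b c -> Hom a b -> Hom a c;   (* cmp g f = g o f *)
  cmp_idl : forall a b (f : Hom a b), cmp a b b (idm b) f = f;
  cmp_idr : forall a b (f : Hom a b), cmp a a b f (idm a) = f;
  cmp_assoc : forall a b c d (f : Hom c d) (g : Hom b c) (h : Hom a b),
      cmp a c d f (cmp a b c g h) = cmp a b d (cmp b c d f g) h }.
Arguments Hom {_} _ _.
Arguments idm {_} _.
Arguments cmp {_ _ _ _} _ _.

Record Functor (C D : Cat) := {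
  fobj :> C -> D;
  fmap : forall a b : C, Hom a b -> Hom (fobj a) (fobj b);
  fmap_id : forall a, fmap a a (idm a) = idm (fobj a);
  fmap_cmp : forall a b c (f : Hom b c) (g : Hom a b),
      fmap a c (cmp f g) = cmp (fmap b c f) (fmap a b g) }.
Arguments fobj {_ _} _ _.
Arguments fmap {_ _} _ {_ _} _.

Definition idF (C : Cat) : Functor C C.
Proof.
  refine {| fobj := fun c => c; fmap := fun a b f => f |}; reflexivity.
Defined.

Record NatTrans (C D : Cat) (F G : Functor C D) := {
  nt :> forall c : C, Hom (F c) (G c);
  nt_nat : forall (c d : C) (f : Hom c d),
      cmp (nt d) (fmap F f) = cmp (fmap G f) (nt c) }.
Arguments NatTrans {_ _} _ _.
Arguments nt {_ _ _ _} _ _.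

Record PreFunctor (C D : Cat) := {
  pobj : C -> D;
  pmap : forall a b : C, Hom a b -> Hom (pobj a) (pobj b) }.
Arguments pobj {_ _} _ _.
Arguments pmap {_ _} _ {_ _} _.

Definition toPF {C D : Cat} (F : Functor C D) : PreFunctor C D :=
  {| pobj := fobj F; pmap := fun a b f => fmap F f |}.

Definition SieveT {C : Cat} (a : C) := forall b : C, Hom b a -> Prop.

Definition is_sieve {C : Cat} {a : C} (S : SieveT a) : Prop :=
  forall b (f : Hom b a), S b f -> forall e (g : Hom e b), S e (cmp f g).

Definition CoverT (C : Cat) := forall a : C, SieveT a -> Prop.

Definition maxS {C : Cat} (a : C) : SieveT a := fun _ _ => True.

Definition pullS {C : Cat} {a b : C} (S : SieveT a) (h : Hom b a) : SieveT b :=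
  fun e g => S e (cmp h g).

Definition is_topology {C : Cat} (J : CoverT C) : Prop :=
  (forall a S, J a S -> is_sieve S) /\
  (forall a, J a (maxS a)) /\
  (forall a (S : SieveT a) b (h : Hom b a), J a S -> J b (pullS S h)) /\
  (forall a (S R : SieveT a), J a S -> is_sieve R ->
      (forall b (f : Hom b a), S b f -> J b (pullS R f)) -> J a R).

Definition triv (C : Cat) : CoverT C := fun a S => forall b (f : Hom b a), S b f.

Definition gen {C : Cat} {a : C} {I : Type} (dom : I -> C)
  (arr : forall i, Hom (dom i) a) : SieveT a :=
  fun e g => exists i (k : Hom e (dom i)), g = cmp (arr i) k.

Definition covers {C : Cat} (K : CoverT C) (a : C) {I : Type} (dom : I -> C)
  (arr : forall i, Hom (dom i) a) : Prop := K a (gen dom arr).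

(* Morphism of sites (C,J) -> (D,K) (Caramello's four conditions). *)
Definition is_site_morphism {C D : Cat} (J : CoverT C) (K : CoverT D)
  (F : PreFunctor C D) : Prop :=
  (forall (a : C) (S : SieveT a), J a S ->
     covers K (pobj F a)
       (fun i : {b : C & {f : Hom b a | S b f}} => pobj F (projT1 i))
       (fun i => pmap F (proj1_sig (projT2 i)))) /\
  (forall d : D, exists (I : Type) (dom : I -> D) (h : forall i, Hom (dom i) d),
     covers K d dom h /\
     forall i, exists (c : C), inhabited (Hom (dom i) (pobj F c))) /\
  (forall (c1 c2 : C) (d : D) (g1 : Hom d (pobj F c1)) (g2 : Hom d (pobj F c2)),
     exists (I : Type) (dom : I -> D) (h : forall i, Hom (dom i) d),
     covers K d dom h /\
     forall i, exists (c : C) (f1 : Hom c c1) (f2 : Hom c c2)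
                      (k : Hom (dom i) (pobj F c)),
       cmp (pmap F f1) k = cmp g1 (h i) /\ cmp (pmap F f2) k = cmp g2 (h i)) /\
  (forall (c1 c2 : C) (f1 f2 : Hom c1 c2) (d : D) (g : Hom d (pobj F c1)),
     cmp (pmap F f1) g = cmp (pmap F f2) g ->
     exists (I : Type) (dom : I -> D) (h : forall i, Hom (dom i) d),
     covers K d dom h /\
     forall i, exists (c : C) (e : Hom c c1) (k : Hom (dom i) (pobj F c)),
       cmp f1 e = cmp f2 e /\ cmp (pmap F e) k = cmp g (h i)).

Definition is_flat {C D : Cat} (F : Functor C D) : Prop :=
  is_site_morphism (triv C) (triv D) (toPF F).

Record Doctrine (C : Cat) := {
  dob : C -> Type;
  dle : forall c, dob c -> dob c -> Prop;
  dle_refl : forall c x, dle c x x;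
  dle_trans : forall c x y z, dle c x y -> dle c y z -> dle c x z;
  dmap : forall (c d : C), Hom d c -> dob c -> dob d;
  dmap_mono : forall c d (f : Hom d c) x y, dle c x y -> dle d (dmap c d f x) (dmap c d f y);
  dmap_id : forall c x, dmap c c (idm c) x = x;
  dmap_cmp : forall c d e (f : Hom d c) (g : Hom e d) x,
      dmap c e (cmp f g) x = dmap d e g (dmap c d f x) }.
Arguments dob {_} _ _.
Arguments dle {_} _ {_} _ _.
Arguments dmap {_} _ {_ _} _ _.

Definition GOb {C : Cat} (P : Doctrine C) := {c : C & dob P c}.
Definition GHom {C : Cat} (P : Doctrine C) (a b : GOb P) :=
  {f : Hom (projT1 a) (projT1 b) | dle P (projT2 a) (dmap P f (projT2 b))}.

Definition Gid {C : Cat} (P : Doctrine C) (a : GOb P) : GHom P a a.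
Proof.
  exists (idm (projT1 a)). rewrite dmap_id. apply dle_refl.
Defined.

Definition Gcmp {C : Cat} (P : Doctrine C) (a b c : GOb P)
  (g : GHom P b c) (f : GHom P a b) : GHom P a c.
Proof.
  exists (cmp (proj1_sig g) (proj1_sig f)).
  rewrite dmap_cmp. eapply dle_trans; [exact (proj2_sig f)|].
  apply dmap_mono. exact (proj2_sig g).
Defined.

Definition Groth {C : Cat} (P : Doctrine C) : Cat.
Proof.
  refine {| Ob := GOb P; Hom := GHom P; idm := Gid P; cmp := Gcmp P |}.
  - intros a b [f Hf]. unfold Gcmp, Gid. apply subset_eq_compat. apply cmp_idl.
  - intros a b [f Hf]. unfold Gcmp, Gid. apply subset_eq_compat. apply cmp_idr.
  - intros a b c d [f Hf] [g Hg] [h Hh]. unfold Gcmp. apply subset_eq_compat. simpl. apply cmp_assoc.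
Defined.

(* a : P => Q o F^op  is a natural transformation of PreOrd-valued functors *)
Definition nat_mono {C D : Cat} (P : Doctrine C) (Q : Doctrine D) (F : Functor C D)
  (a : forall c, dob P c -> dob Q (F c)) : Prop :=
  (forall c (x y : dob P c), dle P x y -> dle Q (a c x) (a c y)) /\
  (forall (c d : C) (f : Hom d c) (x : dob P c),
      a d (dmap P f x) = dmap Q (fmap F f) (a c x)).

Definition groth_pf {C D : Cat} {P : Doctrine C} {Q : Doctrine D} {F : Functor C D}
  {a : forall c, dob P c -> dob Q (F c)} (H : nat_mono P Q F a) :
  PreFunctor (Groth P) (Groth Q).
Proof.
  refine {| pobj := fun (u : Groth P) => (existT (dob Q) (F (projT1 u)) (a _ (projT2 u)) : Groth Q);
            pmap := fun u v f => _ |}.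
  exists (fmap F (proj1_sig f)). simpl.
  destruct H as [Hm Hn]. rewrite <- Hn. apply Hm. exact (proj2_sig f).
Defined.

Definition is_1cell {C D : Cat} {P : Doctrine C} {Q : Doctrine D}
  (J : CoverT (Groth P)) (K : CoverT (Groth Q)) (F : Functor C D)
  (a : forall c, dob P c -> dob Q (F c)) : Prop :=
  is_flat F /\ exists H : nat_mono P Q F a, is_site_morphism J K (groth_pf H).

Definition is_2cell {C D : Cat} {P : Doctrine C} {Q : Doctrine D} {F F' : Functor C D}
  (a : forall c, dob P c -> dob Q (F c)) (a' : forall c, dob P c -> dob Q (F' c))
  (alpha : NatTrans F F') : Prop :=
  forall c (x : dob P c), dle Q (a c x) (dmap Q (alpha c) (a' c x)).

Record OpenFrameDoc {D : Cat} (L : Doctrine D) := {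
  of_antisym : forall c (x y : dob L c), dle L x y -> dle L y x -> x = y;
  of_join : forall c, (dob L c -> Prop) -> dob L c;
  of_join_ub : forall c (S : dob L c -> Prop) x, S x -> dle L x (of_join c S);
  of_join_lub : forall c (S : dob L c -> Prop) y,
      (forall x, S x -> dle L x y) -> dle L (of_join c S) y;
  of_meet : forall c, dob L c -> dob L c -> dob L c;
  of_meet_l : forall c (x y : dob L c), dle L (of_meet c x y) x;
  of_meet_r : forall c (x y : dob L c), dle L (of_meet c x y) y;
  of_meet_glb : forall c (x y z : dob L c), dle L z x -> dle L z y -> dle L z (of_meet c x y);
  of_top : forall c, dob L c;
  of_top_max : forall c (x : dob L c), dle L x (of_top c);
  of_distr : forall c (x : dob L c) (S : dob L c -> Prop),
      of_meet c x (of_join c S) = of_join c (fun z => exists y, S y /\ z = of_meet c x y);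
  of_map_meet : forall c d (f : Hom d c) (x y : dob L c),
      dmap L f (of_meet c x y) = of_meet d (dmap L f x) (dmap L f y);
  of_map_top : forall c d (f : Hom d c), dmap L f (of_top c) = of_top d;
  of_map_join : forall c d (f : Hom d c) (S : dob L c -> Prop),
      dmap L f (of_join c S) = of_join d (fun z => exists y, S y /\ z = dmap L f y);
  of_ex : forall (c d : D), Hom d c -> dob L d -> dob L c;
  of_ex_adj : forall c d (f : Hom d c) (U : dob L d) (V : dob L c),
      dle L (of_ex c d f U) V <-> dle L U (dmap L f V);
  of_frob : forall c d (f : Hom d c) (U : dob L d) (V : dob L c),
      of_ex c d f (of_meet d U (dmap L f V)) = of_meet c (of_ex c d f U) V }.
Arguments of_join {_ _} _ _ _.
Arguments of_ex {_ _} _ {_ _} _ _.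

Definition KL {D : Cat} {L : Doctrine D} (G : OpenFrameDoc L) : CoverT (Groth L) :=
  fun (a : Groth L) (S : SieveT a) =>
    projT2 a = of_join G (projT1 a)
      (fun Z => exists (b : Groth L) (f : Hom b a),
                  S b f /\ Z = of_ex G (proj1_sig f) (projT2 b)).

Definition hlift {D : Cat} (L : Doctrine D) {d e : D} (h : Hom e d) (V : dob L d) :
  @Hom (Groth L) (existT (dob L) e (dmap L h V)) (existT (dob L) d V) :=
  exist _ h (dle_refl D L e (dmap L h V)).

Definition geometric {D : Cat} {L : Doctrine D} (G : OpenFrameDoc L) : Prop :=
  forall (d e : D) (h : Hom e d) (V : dob L d)
         (S : @SieveT (Groth L) (existT (dob L) d V)),
    is_sieve S -> KL G _ S ->
    KL G (existT (dob L) e (dmap L h V)) (pullS S (hlift L h V)).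

Record GeomStr {D : Cat} (L : Doctrine D) := {
  gs_frame :> OpenFrameDoc L;
  gs_geom : geometric gs_frame }.

Definition IdPred {C : Cat} (P : Doctrine C) (c : C) :=
  forall d : C, Hom d c -> dob P d -> Prop.

Definition is_ideal {C : Cat} {P : Doctrine C} (J : CoverT (Groth P)) {c : C}
  (S : IdPred P c) : Prop :=
  (forall d (f : Hom d c) (x : dob P d), S d f x ->
     forall e (g : Hom e d) (y : dob P e), dle P y (dmap P g x) -> S e (cmp f g) y) /\
  (forall d (f : Hom d c) (x : dob P d),
     (exists (I : Type) (dom : I -> Groth P)
             (h : forall i, @Hom (Groth P) (dom i) (existT (dob P) d x)),
        covers J (existT (dob P) d x) dom h /\
        forall i, S (projT1 (dom i)) (cmp f (proj1_sig (h i))) (projT2 (dom i))) ->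
     S d f x).

Definition Icar {C : Cat} {P : Doctrine C} (J : CoverT (Groth P)) (c : C) :=
  {S : IdPred P c | is_ideal J S}.

Definition Ile {C : Cat} {P : Doctrine C} {J : CoverT (Groth P)} {c : C}
  (S T : Icar J c) : Prop :=
  forall d (f : Hom d c) x, proj1_sig S d f x -> proj1_sig T d f x.

Definition Imap {C : Cat} {P : Doctrine C} {J : CoverT (Groth P)} {c d : C}
  (f : Hom d c) (S : Icar J c) : Icar J d.
Proof.
  exists (fun e g y => proj1_sig S e (cmp f g) y).
  destruct (proj2_sig S) as [Ha Hb]. split.
  - intros e g y Hy e' k z Hz. cbv beta in *. rewrite cmp_assoc. eapply Ha; eauto.
  - intros e g y [I [dom [h [Hc Hi]]]]. cbv beta in *. apply Hb.
    exists I, dom, h. split; [exact Hc|]. intro i. rewrite <- cmp_assoc. apply Hi.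
Defined.

Definition IDoc {C : Cat} {P : Doctrine C} (J : CoverT (Groth P)) : Doctrine C.
Proof.
  refine {| dob := Icar J; dle := fun c => @Ile C P J c;
            dmap := fun c d f => @Imap C P J c d f |}.
  - intros c x d f y H; exact H.
  - intros c x y z H1 H2 d f w H; auto.
  - intros c d f x y H e g w Hw; apply H; exact Hw.
  - intros c [x Hx]. unfold Imap. apply subset_eq_compat.
    apply functional_extensionality_dep; intro e.
    apply functional_extensionality; intro g.
    apply functional_extensionality; intro y.
    simpl. rewrite cmp_idl. reflexivity.
  - intros c d e f g [x Hx]. unfold Imap. apply subset_eq_compat.
    apply functional_extensionality_dep; intro e'.
    apply functional_extensionality; intro k.
    apply functional_extensionality; intro y.
    simpl. rewrite cmp_assoc. reflexivity.
Defined.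

(* eta_c(x): smallest ideal containing {(g,y) : y <= P(g)(x)} *)
Definition eta {C : Cat} {P : Doctrine C} (J : CoverT (Groth P)) (c : C)
  (x : dob P c) : dob (IDoc J) c.
Proof.
  exists (fun d f y => forall S : Icar J c,
             (forall e (g : Hom e c) z, dle P z (dmap P g x) -> proj1_sig S e g z) ->
             proj1_sig S d f y).
  split.
  - intros d f y H e g z Hz S HS. destruct (proj2_sig S) as [Ha _].
    eapply Ha; [apply H; exact HS | exact Hz].
  - intros d f y [I [dom [h [Hc Hi]]]] S HS. destruct (proj2_sig S) as [_ Hb].
    apply Hb. exists I, dom, h. split; [exact Hc|]. intro i. apply Hi. exact HS.
Defined.

(* Its naturality is a
     Beck-Chevalley property obtained from geometricity of L and flatness of F;
     it is a 1-cell, restricts to a along eta and is the only such 1-cell, since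
     every ideal is covered by the eta-images of its elements.  The same
     covering shows that 2-cells can be tested on eta-images.
   - Applying the universal property to  eta_K o a  gives the 2-functor on
     1-cells and 2-cells, and the main theorem collects these facts. *)

From Stdlib Require Import ProofIrrelevance FunctionalExtensionality PropExtensionality.

Lemma groth_hom_eq {C : Cat} {P : Doctrine C} {a b : GOb P} (f g : GHom P a b) :
  proj1_sig f = proj1_sig g -> f = g.
Proof.
  destruct f as [f Hf], g as [g Hg]; simpl; intros E. subst g.
  f_equal. apply proof_irrelevance.
Qed.

Lemma gen_is_sieve {C : Cat} {a : C} {I : Type} (dom : I -> C)
  (arr : forall i, Hom (dom i) a) : is_sieve (gen dom arr).
Proof. intros b f [i [k ->]] e g. exists i, (cmp k g). symmetry; apply cmp_assoc. Qed.

Lemma gen_of_sieve {C : Cat} {a : C} (R : SieveT a) : is_sieve R ->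
  gen (fun i : {b : C & {f : Hom b a | R b f}} => projT1 i)
      (fun i => proj1_sig (projT2 i)) = R.
Proof.
  intro HR. apply functional_extensionality_dep; intro b.
  apply functional_extensionality; intro g. apply propositional_extensionality; split.
  - intros [[b' [f Hf]] [k ->]]. apply HR, Hf.
  - intro H. exists (existT _ b (exist _ g H)), (idm b). symmetry; apply cmp_idr.
Qed.

Definition coverage_laws {E : Cat} (K : CoverT E) : Prop :=
  (forall X (R R' : SieveT X), K X R -> (forall b f, R b f -> R' b f) -> K X R') /\
  (forall X Y (R : SieveT X) (k : Hom Y X), is_sieve R -> K X R -> K Y (pullS R k)) /\
  (forall X (R R' : SieveT X), K X R -> (forall b f, R b f -> K b (pullS R' f)) -> K X R').

Definition covered_by {E : Cat} (K : CoverT E) (X : E) (Pr : forall b, Hom b X -> Prop) : Prop :=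
  exists (I : Type) (dom : I -> E) (h : forall i, Hom (dom i) X),
    covers K X dom h /\ forall i, Pr (dom i) (h i).

Lemma covering_family {E : Cat} (K : CoverT E) (HK : coverage_laws K) (X : E)
  (Pr : SieveT X) : K X Pr -> covered_by K X Pr.
Proof.
  intro H.
  exists {b : E & {f : Hom b X | Pr b f}}, (fun i => projT1 i),
    (fun i : {b : E & {f : Hom b X | Pr b f}} => proj1_sig (projT2 i)).
  split.
  - apply (proj1 HK _ Pr); [exact H|]. intros b f Hf.
    exists (existT _ b (exist _ f Hf)), (idm b). symmetry; apply cmp_idr.
  - intros [b [f Hf]]. exact Hf.
Qed.

Lemma site_morphism_ext {A E : Cat} (J1 : CoverT A) (J3 : CoverT E) (o : A -> E)
  (m1 m2 : forall a b, Hom a b -> Hom (o a) (o b)) :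
  (forall a b f, m1 a b f = m2 a b f) ->
  is_site_morphism J1 J3 (Build_PreFunctor A E o m1) ->
  is_site_morphism J1 J3 (Build_PreFunctor A E o m2).
Proof.
  intros H. replace m2 with m1; [auto|].
  apply functional_extensionality_dep; intro a. apply functional_extensionality_dep; intro b.
  apply functional_extensionality; intro f. apply H.
Qed.

Lemma groth_pf_cmp {C D : Cat} {P : Doctrine C} {Q : Doctrine D} {F : Functor C D}
  {a : forall c, dob P c -> dob Q (F c)} (H : nat_mono P Q F a) :
  forall x y z (f : @Hom (Groth P) y z) (g : @Hom (Groth P) x y),
    pmap (groth_pf H) (cmp f g) = cmp (pmap (groth_pf H) f) (pmap (groth_pf H) g).
Proof. intros. apply groth_hom_eq. apply fmap_cmp. Qed.

(* Flat functors: the two filteredness conditions, read off the trivial topology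
   by covering the identity. *)
Section Flat.
Context {C D : Cat} (F : Functor C D) (HF : is_flat F).

Lemma flat_span (c1 c2 : C) (d : D) (g1 : Hom d (F c1)) (g2 : Hom d (F c2)) :
  exists (c : C) (f1 : Hom c c1) (f2 : Hom c c2) (k : Hom d (F c)),
    cmp (fmap F f1) k = g1 /\ cmp (fmap F f2) k = g2.
Proof.
  destruct HF as [_ [_ [Hiii _]]].
  destruct (Hiii c1 c2 d g1 g2) as [I [dom [h [Hc Hd]]]].
  destruct (Hc d (idm d)) as [i [m Hm]].
  destruct (Hd i) as [c [f1 [f2 [k [E1 E2]]]]]. cbn [pobj pmap toPF] in *.
  exists c, f1, f2, (cmp k m). split.
  - rewrite cmp_assoc, E1, <- cmp_assoc, <- Hm. apply cmp_idr.
  - rewrite cmp_assoc, E2, <- cmp_assoc, <- Hm. apply cmp_idr.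
Qed.

Lemma flat_equalize (c1 c2 : C) (f1 f2 : Hom c1 c2) (d : D) (g : Hom d (F c1)) :
  cmp (fmap F f1) g = cmp (fmap F f2) g ->
  exists (c : C) (e : Hom c c1) (k : Hom d (F c)),
    cmp f1 e = cmp f2 e /\ cmp (fmap F e) k = g.
Proof.
  intro Eg. destruct HF as [_ [_ [_ Hiv]]].
  destruct (Hiv c1 c2 f1 f2 d g Eg) as [I [dom [h [Hc Hd]]]].
  destruct (Hc d (idm d)) as [i [m Hm]].
  destruct (Hd i) as [c [e [k [E1 E2]]]]. cbn [pobj pmap toPF] in *.
  exists c, e, (cmp k m). split; [exact E1|].
  rewrite cmp_assoc, E2, <- cmp_assoc, <- Hm. apply cmp_idr.
Qed.

Lemma flat_square (c d e : C) (h : Hom d c) (f : Hom e c) (b : D)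
  (g : Hom b (F d)) (k : Hom b (F e)) :
  cmp (fmap F h) g = cmp (fmap F f) k ->
  exists (c' : C) (u : Hom c' d) (v : Hom c' e) (w : Hom b (F c')),
    cmp h u = cmp f v /\ cmp (fmap F u) w = g /\ cmp (fmap F v) w = k.
Proof.
  intro Ek.
  destruct (flat_span d e b g k) as [c1 [f1 [f2 [k1 [E1 E2]]]]].
  assert (Eq : cmp (fmap F (cmp h f1)) k1 = cmp (fmap F (cmp f f2)) k1).
  { rewrite !fmap_cmp, <- !cmp_assoc, E1, E2. exact Ek. }
  destruct (flat_equalize _ _ _ _ b k1 Eq) as [c' [e' [w [E3 E4]]]].
  exists c', (cmp f1 e'), (cmp f2 e'), w. split; [|split].
  - rewrite !cmp_assoc. exact E3.
  - rewrite fmap_cmp, <- cmp_assoc, E4. exact E1.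
  - rewrite fmap_cmp, <- cmp_assoc, E4. exact E2.
Qed.

End Flat.

Lemma idF_flat (C : Cat) : is_flat (idF C).
Proof.
  assert (Hid : forall d : C, covers (triv C) d (fun _ : unit => d) (fun _ => idm d)).
  { intros d b f. exists tt, f. symmetry; apply cmp_idl. }
  split; [|split; [|split]].
  - intros a S HS b f. exists (existT _ b (exist _ f (HS b f))), (idm b).
    symmetry; apply cmp_idr.
  - intros d. exists unit, (fun _ => d), (fun _ => idm d). split; [apply Hid|].
    intros _. exists d. constructor. exact (idm d).
  - intros c1 c2 d g1 g2. exists unit, (fun _ => d), (fun _ => idm d). split; [apply Hid|].
    intros _. exists d, g1, g2, (idm d). auto.
  - intros c1 c2 f1 f2 d g Eg. exists unit, (fun _ => d), (fun _ => idm d).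
    split; [apply Hid|]. intros _. exists d, g, (idm d). auto.
Qed.

(* Composition of site morphisms, when the target coverage satisfies the
   coverage laws (this is all that is needed of a topology here). *)
Section CompositeSite.
Context {A B E : Cat} (J1 : CoverT A) (J2 : CoverT B) (J3 : CoverT E)
  (F1 : PreFunctor A B) (F2 : PreFunctor B E) (HJ3 : coverage_laws J3)
  (F2_cmp : forall a b c (f : Hom b c) (g : Hom a b),
      pmap F2 (cmp f g) = cmp (pmap F2 f) (pmap F2 g))
  (H1 : is_site_morphism J1 J2 F1) (H2 : is_site_morphism J2 J3 F2).

Definition compPF : PreFunctor A E :=
  {| pobj := fun a => pobj F2 (pobj F1 a); pmap := fun a b f => pmap F2 (pmap F1 f) |}.

Lemma image_cover_pullback (b : B) {I} (dom : I -> B) (h : forall i, Hom (dom i) b) :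
  covers J2 b dom h -> forall y (u : Hom y (pobj F2 b)),
  J3 y (fun z g => exists j b0 (n : Hom b0 (dom j)) (l : Hom z (pobj F2 b0)),
           cmp u g = cmp (pmap F2 (cmp (h j) n)) l).
Proof.
  intros Hc y u. destruct HJ3 as [HM [HS _]].
  assert (H := proj1 H2 b _ Hc).
  apply (HM _ _ _ (HS _ _ _ u (gen_is_sieve _ _) H)).
  intros z g [[b0 [w [j [n Hw]]]] [k Hk]]. simpl in Hk. subst w.
  exists j, b0, n, k. exact Hk.
Qed.

(* The four clauses for the composite: each instance of a clause of F2 is refined
   by pulling back, along the resulting arrows, F2-images of instances of the
   corresponding clause of F1. *)
Lemma comp_site_covers (a : A) (S : SieveT a) : J1 a S ->
  covers J3 (pobj compPF a)
    (fun i : {b : A & {f : Hom b a | S b f}} => pobj compPF (projT1 i))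
    (fun i => pmap compPF (proj1_sig (projT2 i))).
Proof.
  intro HSa. assert (Hc := proj1 H2 _ _ (proj1 H1 a S HSa)).
  apply (proj1 HJ3 _ _ _ Hc). intros z g [[b0 [w [[b1 [f Hf]] [k Hk]]]] [l Hl]].
  simpl in Hk, Hl. subst w.
  exists (existT _ b1 (exist _ f Hf)), (cmp (pmap F2 k) l). simpl.
  rewrite Hl, F2_cmp. symmetry; apply cmp_assoc.
Qed.

Lemma comp_site_cover_image (e : E) :
  covered_by J3 e (fun z _ => exists a, inhabited (Hom z (pobj compPF a))).
Proof.
  destruct (proj1 (proj2 H2) e) as [I [dom [h [Hc Hd]]]].
  apply (covering_family J3 HJ3 e), (proj2 (proj2 HJ3) _ _ _ Hc).
  intros b f [i [m ->]]. destruct (Hd i) as [c [u]].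
  destruct (proj1 (proj2 H1) c) as [I' [dom' [h' [Hc' Hd']]]].
  apply (proj1 HJ3 _ _ _ (image_cover_pullback c dom' h' Hc' _ (cmp u m))).
  intros z g [j [b0 [n [l _]]]]. destruct (Hd' j) as [a [v]].
  exists a. constructor. exact (cmp (pmap F2 (cmp v n)) l).
Qed.

Lemma comp_site_spans (c1 c2 : A) (e : E) (g1 : Hom e (pobj compPF c1))
  (g2 : Hom e (pobj compPF c2)) :
  covered_by J3 e (fun z g =>
    exists (c : A) (f1 : Hom c c1) (f2 : Hom c c2) (k : Hom z (pobj compPF c)),
      cmp (pmap compPF f1) k = cmp g1 g /\ cmp (pmap compPF f2) k = cmp g2 g).
Proof.
  destruct (proj1 (proj2 (proj2 H2)) _ _ e g1 g2) as [I [dom [h [Hc Hd]]]].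
  apply (covering_family J3 HJ3 e), (proj2 (proj2 HJ3) _ _ _ Hc).
  intros b f [i [m ->]].
  destruct (Hd i) as [b1 [f1 [f2 [k [Ek1 Ek2]]]]].
  destruct (proj1 (proj2 (proj2 H1)) _ _ _ f1 f2) as [I' [dom' [h' [Hc' Hd']]]].
  apply (proj1 HJ3 _ _ _ (image_cover_pullback b1 dom' h' Hc' _ (cmp k m))).
  intros z g [j [b0 [n [l Hl]]]].
  destruct (Hd' j) as [c [f1' [f2' [kj [Ej1 Ej2]]]]].
  exists c, f1', f2', (cmp (pmap F2 (cmp kj n)) l). simpl. split.
  - rewrite cmp_assoc, <- F2_cmp, cmp_assoc, Ej1, <- cmp_assoc, F2_cmp, <- cmp_assoc,
      <- Hl, !cmp_assoc, Ek1. reflexivity.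
  - rewrite cmp_assoc, <- F2_cmp, cmp_assoc, Ej2, <- cmp_assoc, F2_cmp, <- cmp_assoc,
      <- Hl, !cmp_assoc, Ek2. reflexivity.
Qed.

Lemma comp_site_equalizers (c1 c2 : A) (f1 f2 : Hom c1 c2) (e : E)
  (g : Hom e (pobj compPF c1)) :
  cmp (pmap compPF f1) g = cmp (pmap compPF f2) g ->
  covered_by J3 e (fun z g' =>
    exists (c : A) (e' : Hom c c1) (k : Hom z (pobj compPF c)),
      cmp f1 e' = cmp f2 e' /\ cmp (pmap compPF e') k = cmp g g').
Proof.
  intro Eg. destruct (proj2 (proj2 (proj2 H2)) _ _ _ _ e g Eg) as [I [dom [h [Hc Hd]]]].
  apply (covering_family J3 HJ3 e), (proj2 (proj2 HJ3) _ _ _ Hc).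
  intros b f [i [m ->]].
  destruct (Hd i) as [b1 [e1 [k [Ee1 Ek]]]].
  destruct (proj2 (proj2 (proj2 H1)) _ _ _ _ _ e1 Ee1) as [I' [dom' [h' [Hc' Hd']]]].
  apply (proj1 HJ3 _ _ _ (image_cover_pullback b1 dom' h' Hc' _ (cmp k m))).
  intros z g' [j [b0 [n [l Hl]]]].
  destruct (Hd' j) as [c [e' [kj [Ej1 Ej2]]]].
  exists c, e', (cmp (pmap F2 (cmp kj n)) l). split; [exact Ej1|]. simpl.
  rewrite cmp_assoc, <- F2_cmp, cmp_assoc, Ej2, <- cmp_assoc, F2_cmp, <- cmp_assoc,
    <- Hl, !cmp_assoc, Ek. reflexivity.
Qed.

Lemma comp_site : is_site_morphism J1 J3 compPF.
Proof.
  split; [exact comp_site_covers|split; [exact comp_site_cover_image|split]].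
  - exact comp_site_spans.
  - exact comp_site_equalizers.
Qed.

End CompositeSite.

Section OpenFrame.
Context {D : Cat} {L : Doctrine D} (G : OpenFrameDoc L).

Lemma ex_le c d (f : Hom d c) U V : dle L U (dmap L f V) -> dle L (of_ex G f U) V.
Proof. apply (of_ex_adj _ G). Qed.

Lemma ex_le_inv c d (f : Hom d c) U V : dle L (of_ex G f U) V -> dle L U (dmap L f V).
Proof. apply (of_ex_adj _ G). Qed.

Lemma ex_unit c d (f : Hom d c) U : dle L U (dmap L f (of_ex G f U)).
Proof. apply ex_le_inv, dle_refl. Qed.

Lemma ex_mono c d (f : Hom d c) U U' : dle L U U' -> dle L (of_ex G f U) (of_ex G f U').
Proof. intro H. apply ex_le. eapply dle_trans; [exact H|apply ex_unit]. Qed.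

(* Existential images compose, as left adjoints of composable maps. *)
Lemma ex_cmp c d e (f : Hom d c) (g : Hom e d) U :
  of_ex G (cmp f g) U = of_ex G f (of_ex G g U).
Proof.
  apply (of_antisym _ G).
  - apply ex_le. rewrite dmap_cmp. eapply dle_trans; [apply (ex_unit _ _ g)|].
    apply dmap_mono, ex_unit.
  - apply ex_le, ex_le. rewrite <- dmap_cmp. apply ex_unit.
Qed.

Lemma ex_id c U : of_ex G (idm c) U = U.
Proof.
  apply (of_antisym _ G).
  - apply ex_le. rewrite dmap_id. apply dle_refl.
  - generalize (ex_unit _ _ (idm c) U). rewrite dmap_id. auto.
Qed.

Lemma arrow_ex (X Y : Groth L) (f : @Hom (Groth L) X Y) :
  dle L (of_ex G (proj1_sig f) (projT2 X)) (projT2 Y).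
Proof. apply ex_le. exact (proj2_sig f). Qed.

Lemma KL_le (X : Groth L) (R : SieveT X) : KL G X R -> forall Y,
  (forall b (f : @Hom (Groth L) b X), R b f -> dle L (of_ex G (proj1_sig f) (projT2 b)) Y) ->
  dle L (projT2 X) Y.
Proof.
  unfold KL. intros H Y HY. rewrite H. apply (of_join_lub _ G).
  intros x [b [f [Hf ->]]]. apply HY, Hf.
Qed.

Lemma KL_intro (X : Groth L) (R : SieveT X) :
  (forall Y, (forall b (f : @Hom (Groth L) b X), R b f ->
       dle L (of_ex G (proj1_sig f) (projT2 b)) Y) -> dle L (projT2 X) Y) ->
  KL G X R.
Proof.
  intro H. unfold KL. apply (of_antisym _ G).
  - apply H. intros b f Hf. apply (of_join_ub _ G). exists b, f. split; auto.
  - apply (of_join_lub _ G). intros x [b [f [Hf ->]]]. apply arrow_ex.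
Qed.

Lemma KL_maximal (X : Groth L) : KL G X (fun _ _ => True).
Proof.
  apply KL_intro. intros Y HY. specialize (HY X (Gid L X) I). simpl in HY.
  rewrite ex_id in HY. exact HY.
Qed.

Lemma KL_mono (X : Groth L) (R R' : SieveT X) : KL G X R ->
  (forall b f, R b f -> R' b f) -> KL G X R'.
Proof.
  intros H HR. apply KL_intro. intros Y HY. apply (KL_le _ _ H).
  intros b f Hf. apply HY, HR, Hf.
Qed.

Lemma KL_trans (X : Groth L) (R R' : SieveT X) : KL G X R ->
  (forall b (f : @Hom (Groth L) b X), R b f -> KL G b (pullS R' f)) -> KL G X R'.
Proof.
  intros H HR. apply KL_intro. intros Y HY. apply (KL_le _ _ H). intros b f Hf.
  apply ex_le. apply (KL_le _ _ (HR _ _ Hf)). intros b' g Hg.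
  apply ex_le. rewrite <- dmap_cmp. apply ex_le_inv. exact (HY _ _ Hg).
Qed.

(* Stability under pullback along arbitrary arrows (d,W) <- (e,W'): geometricity
   handles the reindexing along e -> d, distributivity and Frobenius reciprocity
   the restriction from L(k)W down to W'. *)
Lemma KL_pull (Hgeo : geometric G) (X Y : Groth L) (R : SieveT X) (k : @Hom (Groth L) Y X) :
  is_sieve R -> KL G X R -> KL G Y (pullS R k).
Proof.
  destruct X as [d W], Y as [e W'], k as [kk Hk]. intros HR HK.
  assert (HG := Hgeo d e kk W R HR HK). unfold KL in HG. cbn [projT1 projT2] in HG.
  apply KL_intro. intros Y0 HY. cbn [projT1 projT2] in *.
  eapply dle_trans; [apply (of_meet_glb _ G _ W' (dmap L kk W) W'); [apply dle_refl|exact Hk]|].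
  rewrite HG, (of_distr _ G). apply (of_join_lub _ G). intros z [y [[b [g [Hg ->]]] ->]].
  eapply dle_trans.
  { apply (of_meet_glb _ G); [apply (of_meet_r _ G)|apply (of_meet_l _ G)]. }
  rewrite <- (of_frob _ G).
  set (U' := of_meet L G _ (projT2 b) (dmap L (proj1_sig g) W')).
  set (g' := exist (fun g0 => dle L U' (dmap L g0 W')) (proj1_sig g) (of_meet_r _ G _ _ _)
             : @Hom (Groth L) (existT (dob L) (projT1 b) U') (existT (dob L) e W')).
  apply (HY _ g'). unfold pullS in Hg |- *.
  set (iota := exist (fun g0 => dle L U' (dmap L g0 (projT2 b))) (idm (projT1 b))
                 (eq_ind_r (fun z => dle L U' z) (of_meet_l _ G _ _ _) (dmap_id _ _ _ _))
               : @Hom (Groth L) (existT (dob L) (projT1 b) U') b).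
  assert (E : cmp (cmp (hlift L kk W) g) iota =
              cmp (exist (fun g0 => dle L W' (dmap L g0 W)) kk Hk
                   : @Hom (Groth L) (existT (dob L) e W') (existT (dob L) d W)) g').
  { apply groth_hom_eq. simpl. apply cmp_idr. }
  exact (eq_rect _ (R _) (HR _ _ Hg _ iota) _ E).
Qed.

Lemma KL_coverage_laws : geometric G -> coverage_laws (KL G).
Proof.
  intro Hg. split; [exact KL_mono|split; [|exact KL_trans]].
  intros X Y R k. apply KL_pull, Hg.
Qed.

End OpenFrame.

Section Ideals.
Context {C : Cat} {P : Doctrine C} (J : CoverT (Groth P)) (HJ : is_topology J).

Definition subpred {c : C} (S T : IdPred P c) : Prop := forall d f x, S d f x -> T d f x.

Definition down {c : C} (S : IdPred P c) : Prop :=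
  forall d (f : Hom d c) (x : dob P d), S d f x ->
  forall e (g : Hom e d) (y : dob P e), dle P y (dmap P g x) -> S e (cmp f g) y.

Lemma ideal_down {c : C} (S : IdPred P c) : is_ideal J S -> down S.
Proof. intros [H _]; exact H. Qed.

Lemma Icar_down {c : C} (S : Icar J c) : down (proj1_sig S).
Proof. apply ideal_down, (proj2_sig S). Qed.

Lemma ideal_local {c : C} (S : IdPred P c) : is_ideal J S ->
  forall d (f : Hom d c) (x : dob P d) (R : SieveT (existT (dob P) d x : Groth P)),
  J _ R ->
  (forall b (g : @Hom (Groth P) b (existT (dob P) d x)), R b g ->
      S (projT1 b) (cmp f (proj1_sig g)) (projT2 b)) ->
  S d f x.
Proof.
  intros [_ Hb] d f x R HR Hall. apply Hb.
  exists {b : Groth P & {g : @Hom (Groth P) b (existT (dob P) d x) | R b g}},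
    (fun i => projT1 i),
    (fun i : {b : Groth P & {g : @Hom (Groth P) b (existT (dob P) d x) | R b g}} =>
        proj1_sig (projT2 i)).
  split.
  - unfold covers. rewrite gen_of_sieve; [exact HR|exact (proj1 HJ _ _ HR)].
  - intros [b [g Hg]]. apply Hall, Hg.
Qed.

Lemma J_pull (X Y : Groth P) (R : SieveT X) (g : @Hom (Groth P) Y X) :
  J X R -> J Y (pullS R g).
Proof. apply (proj1 (proj2 (proj2 HJ))). Qed.

Lemma Iext {c : C} (S T : Icar J c) :
  (forall d f x, proj1_sig S d f x <-> proj1_sig T d f x) -> S = T.
Proof.
  destruct S as [S HS], T as [T HT]; simpl; intro H.
  assert (S = T) as <-.
  { apply functional_extensionality_dep; intro d. apply functional_extensionality; intro f.
    apply functional_extensionality; intro x. apply propositional_extensionality, H. }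
  f_equal. apply proof_irrelevance.
Qed.

Definition clo {c : C} (T : IdPred P c) : IdPred P c :=
  fun d f y => forall S : Icar J c, subpred T (proj1_sig S) -> proj1_sig S d f y.

Lemma clo_ideal {c : C} (T : IdPred P c) : is_ideal J (clo T).
Proof.
  split.
  - intros d f y H e g z Hz S HS. eapply (Icar_down S); [apply H, HS|exact Hz].
  - intros d f y [I [dom [h [Hc Hi]]]] S HS. apply (proj2 (proj2_sig S)).
    exists I, dom, h. split; [exact Hc|]. intro i. apply Hi, HS.
Qed.

Definition cloI {c : C} (T : IdPred P c) : Icar J c := exist _ (clo T) (clo_ideal T).

Lemma clo_incl {c : C} (T : IdPred P c) : subpred T (clo T).
Proof. intros e g z H S HS. apply HS, H. Qed.

Lemma clo_least {c : C} (T S : IdPred P c) :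
  is_ideal J S -> subpred T S -> subpred (clo T) S.
Proof. intros HS HT d f y H. exact (H (exist _ S HS) HT). Qed.

Definition Iimp {c : C} (S R : IdPred P c) : IdPred P c :=
  fun d f x => forall e (g : Hom e d) (y : dob P e), dle P y (dmap P g x) ->
     S e (cmp f g) y -> R e (cmp f g) y.

Lemma Iimp_ideal {c : C} (S R : IdPred P c) : down S -> is_ideal J R -> is_ideal J (Iimp S R).
Proof.
  intros HS HR. split.
  - intros d f x H e g y Hy e' g' y' Hy' HSy.
    rewrite <- cmp_assoc in HSy |- *. apply H; [|exact HSy].
    rewrite dmap_cmp. eapply dle_trans; [exact Hy'|]. apply dmap_mono, Hy.
  - intros d f x [I [dom [h [Hc Hi]]]] e g y Hy HSy.
    set (garr := exist (fun g0 => dle P y (dmap P g0 x)) g Hy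
                  : @Hom (Groth P) (existT (dob P) e y) (existT (dob P) d x)).
    apply (ideal_local _ HR e (cmp f g) y (pullS (gen dom h) garr)); [apply J_pull, Hc|].
    intros b k [i [m Hm]].
    assert (E : cmp g (proj1_sig k) = cmp (proj1_sig (h i)) (proj1_sig m))
      by exact (f_equal (@proj1_sig _ _) Hm).
    rewrite <- cmp_assoc, E, cmp_assoc. apply Hi; [exact (proj2_sig m)|].
    cbn [projT1 projT2] in *. rewrite <- cmp_assoc, <- E, cmp_assoc.
    exact (HS _ _ _ HSy _ _ _ (proj2_sig k)).
Qed.

Lemma Iimp_mp {c : C} (S R : IdPred P c) d (f : Hom d c) x :
  Iimp S R d f x -> S d f x -> R d f x.
Proof.
  intros H HS. specialize (H d (idm d) x). rewrite cmp_idr, dmap_id in H.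
  exact (H (dle_refl _ _ _ _) HS).
Qed.

Definition Iforall {c d : C} (h : Hom d c) (R : IdPred P d) : IdPred P c :=
  fun e k w => forall e' (m : Hom e' d) (n : Hom e' e) (w' : dob P e'),
      cmp h m = cmp k n -> dle P w' (dmap P n w) -> R e' m w'.

Lemma Iforall_ideal {c d : C} (h : Hom d c) (R : IdPred P d) :
  is_ideal J R -> is_ideal J (Iforall h R).
Proof.
  intros HR. split.
  - intros e k w H e2 g y Hy e' m n w' Em Hw'.
    apply (H e' m (cmp g n) w').
    + rewrite Em. symmetry; apply cmp_assoc.
    + rewrite dmap_cmp. eapply dle_trans; [exact Hw'|]. apply dmap_mono, Hy.
  - intros e k w [I [dom [h0 [Hc Hi]]]] e' m n w' Em Hw'.
    set (narr := exist (fun g0 => dle P w' (dmap P g0 w)) n Hw'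
                  : @Hom (Groth P) (existT (dob P) e' w') (existT (dob P) e w)).
    apply (ideal_local _ HR e' m w' (pullS (gen dom h0) narr)); [apply J_pull, Hc|].
    intros b j [i [l Hl]].
    assert (E : cmp n (proj1_sig j) = cmp (proj1_sig (h0 i)) (proj1_sig l))
      by exact (f_equal (@proj1_sig _ _) Hl).
    apply (Hi i (projT1 b) (cmp m (proj1_sig j)) (proj1_sig l) (projT2 b)).
    + rewrite cmp_assoc, Em, <- cmp_assoc, E, cmp_assoc. reflexivity.
    + exact (proj2_sig l).
Qed.

Lemma Iforall_counit {c d : C} (h : Hom d c) (R : IdPred P d) e (m : Hom e d) w :
  Iforall h R e (cmp h m) w -> R e m w.
Proof.
  intro H. apply (H e m (idm e) w); [symmetry; apply cmp_idr|].
  rewrite dmap_id. apply dle_refl.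
Qed.

Definition principal {c : C} (x : dob P c) : IdPred P c :=
  fun e g z => dle P z (dmap P g x).

Lemma eta_least {c : C} (x : dob P c) (S : IdPred P c) :
  is_ideal J S -> subpred (principal x) S -> subpred (proj1_sig (eta J c x)) S.
Proof. apply clo_least. Qed.

Lemma eta_incl {c : C} (x : dob P c) : subpred (principal x) (proj1_sig (eta J c x)).
Proof. apply clo_incl. Qed.

Lemma generated_below_eta {c d : C} (S : IdPred P d) (g : Hom d c) (x : dob P c) :
  down S -> (forall e h y, S e h y -> proj1_sig (eta J c x) e (cmp g h) y) ->
  subpred S (clo (fun e h y => S e h y /\ dle P y (dmap P (cmp g h) x))).
Proof.
  intros HS Hsub.
  set (T := fun e h y => S e h y /\ dle P y (dmap P (cmp g h) x)).
  assert (Hpi : subpred (proj1_sig (eta J c x)) (Iforall g (Iimp S (clo T)))).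
  { apply eta_least; [apply Iforall_ideal, Iimp_ideal; [exact HS|apply clo_ideal]|].
    intros e1 k w Hw e' m n w' Em Hw' e2 m2 y2 Hy2 HS2. apply clo_incl. split; [exact HS2|].
    rewrite cmp_assoc, Em, <- cmp_assoc, dmap_cmp, dmap_cmp.
    eapply dle_trans; [exact Hy2|]. apply dmap_mono. eapply dle_trans; [exact Hw'|].
    apply dmap_mono, Hw. }
  intros e h y Hy. apply (Iimp_mp S); [|exact Hy].
  exact (Iforall_counit _ _ _ _ _ (Hpi _ _ _ (Hsub _ _ _ Hy))).
Qed.

End Ideals.

Section IFrame.
Context {C : Cat} {P : Doctrine C} (J : CoverT (Groth P)) (HJ : is_topology J).

Definition Ijoin c (Phi : Icar J c -> Prop) : Icar J c :=
  cloI J (fun d f y => exists S : Icar J c, Phi S /\ proj1_sig S d f y).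

Lemma meet_ideal c (S T : Icar J c) :
  is_ideal J (fun d f y => proj1_sig S d f y /\ proj1_sig T d f y).
Proof.
  destruct (proj2_sig S) as [Sa Sb], (proj2_sig T) as [Ta Tb]. split.
  - intros d f x [H1 H2] e g y Hy. split; [eapply Sa|eapply Ta]; eauto.
  - intros d f x [I [dom [h [Hc Hi]]]].
    split; [apply Sb|apply Tb]; exists I, dom, h; split; auto; intro i; apply Hi.
Qed.

Definition Imeet c (S T : Icar J c) : Icar J c := exist _ _ (meet_ideal c S T).

Definition Itop c : Icar J c :=
  exist _ (fun (d : C) (f : Hom d c) (y : dob P d) => True)
    (conj (fun _ _ _ _ _ _ _ _ => I) (fun _ _ _ _ => I)).

Definition Iex c d (f : Hom d c) (U : Icar J d) : Icar J c :=
  cloI J (fun e g z => exists k, g = cmp f k /\ proj1_sig U e k z).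

Lemma I_distr c (x : Icar J c) (S : Icar J c -> Prop) :
  Imeet c x (Ijoin c S) = Ijoin c (fun z => exists y, S y /\ z = Imeet c x y).
Proof.
  apply (Iext J). intros d f y. simpl. split.
  - intros [Hx HS]. apply (Iimp_mp (proj1_sig x)); [|exact Hx].
    refine (clo_least J _ _ _ _ _ _ _ HS); [apply (Iimp_ideal J HJ); [apply Icar_down|apply clo_ideal]|].
    intros e g z [T [HT Hz]] e' g' y' Hy' Hxy. apply clo_incl.
    exists (Imeet c x T). split; [exists T; auto|]. split; [exact Hxy|].
    exact (Icar_down J T _ _ _ Hz _ _ _ Hy').
  - revert d f y. apply clo_least; [apply (meet_ideal c x (Ijoin c S))|].
    intros e g z [Z [[T [HT ->]] [Hx HTz]]].
    split; [exact Hx|]. apply clo_incl. exists T; auto.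
Qed.

Lemma I_map_join c d (f : Hom d c) (S : Icar J c -> Prop) :
  Imap f (Ijoin c S) = Ijoin d (fun z => exists y, S y /\ z = Imap f y).
Proof.
  apply (Iext J). intros e g y. simpl. split.
  - intro H. apply (Iforall_counit f).
    refine (clo_least J _ _ _ _ _ _ _ H); [apply (Iforall_ideal J HJ), clo_ideal|].
    intros e0 k w [T [HT Hw]] e' m n w' Em Hw'. apply clo_incl. exists (Imap f T).
    split; [exists T; auto|]. simpl. rewrite Em.
    exact (Icar_down J T _ _ _ Hw _ _ _ Hw').
  - revert e g y. apply clo_least; [apply (proj2_sig (Imap f (Ijoin c S)))|].
    intros e0 g0 z [Z [[T [HT ->]] Hz]]. apply clo_incl. exists T; auto.
Qed.

Lemma I_ex_adj c d (f : Hom d c) (U : Icar J d) (V : Icar J c) :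
  Ile (Iex c d f U) V <-> Ile U (Imap f V).
Proof.
  split.
  - intros H e g z Hz. apply H, clo_incl. exists g; auto.
  - intros H. apply clo_least; [apply (proj2_sig V)|].
    intros e g z [k [-> Hk]]. apply (H _ _ _ Hk).
Qed.

Lemma I_frob c d (f : Hom d c) (U : Icar J d) (V : Icar J c) :
  Iex c d f (Imeet d U (Imap f V)) = Imeet c (Iex c d f U) V.
Proof.
  apply (Iext J). intros e g y. split.
  - revert e g y. apply clo_least; [apply (meet_ideal c (Iex c d f U) V)|].
    intros e0 g0 z [k [-> [Hk1 Hk2]]]. split; [apply clo_incl; exists k; auto|exact Hk2].
  - intros [H1 H2]. apply (Iimp_mp (proj1_sig V)); [|exact H2].
    refine (clo_least J _ _ _ _ _ _ _ H1); [apply (Iimp_ideal J HJ); [apply Icar_down|apply clo_ideal]|].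
    intros e0 g0 z [k [-> Hk]] e' g' y' Hy' HV. apply clo_incl. exists (cmp k g').
    split; [symmetry; apply cmp_assoc|]. split.
    + exact (Icar_down J U _ _ _ Hk _ _ _ Hy').
    + simpl. rewrite cmp_assoc. exact HV.
Qed.

Definition IFrame : OpenFrameDoc (IDoc J).
Proof.
  refine (@Build_OpenFrameDoc C (IDoc J) _ Ijoin _ _ Imeet _ _ _ Itop _ _ _ _ _ Iex _ _).
  - intros c x y H1 H2. apply (Iext J). intros; split; [apply H1|apply H2].
  - intros c S x Hx d f y Hy. apply clo_incl. exists x; auto.
  - intros c S y H. apply clo_least; [apply (proj2_sig y)|].
    intros e g z [T [HT Hz]]. exact (H T HT _ _ _ Hz).
  - intros c x y d f z [H _]; exact H.
  - intros c x y d f z [_ H]; exact H.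
  - intros c x y z H1 H2 d f w Hw; split; [apply H1|apply H2]; exact Hw.
  - intros c x d f y _; exact I.
  - apply I_distr.
  - intros c d f x y. apply (Iext J). intros; simpl; tauto.
  - intros c d f. apply (Iext J). intros; simpl; tauto.
  - apply I_map_join.
  - apply I_ex_adj.
  - apply I_frob.
Defined.

Definition supp {X : Groth (IDoc J)} (R : SieveT X) : IdPred P (projT1 X) :=
  fun e m w => exists b (f : @Hom (Groth (IDoc J)) b X) (k : Hom e (projT1 b)),
    R b f /\ m = cmp (proj1_sig f) k /\ proj1_sig (projT2 b : Icar J _) e k w.

Lemma KLI_le (G : OpenFrameDoc (IDoc J)) (X : Groth (IDoc J)) (R : SieveT X) :
  KL G X R -> forall Q : IdPred P (projT1 X), is_ideal J Q ->
  subpred (supp R) Q -> subpred (proj1_sig (projT2 X : Icar J _)) Q.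
Proof.
  intros HK Q HQ Hs. apply (KL_le G X R HK (exist _ Q HQ : Icar J _)).
  intros b f Hf. apply ex_le. intros e k w Hw. apply Hs. exists b, f, k; auto.
Qed.

Lemma KLI_intro (G : OpenFrameDoc (IDoc J)) (X : Groth (IDoc J)) (R : SieveT X) :
  subpred (proj1_sig (projT2 X : Icar J _)) (clo J (supp R)) -> KL G X R.
Proof.
  intros H. apply KL_intro. intros Y HY d g y Hy. generalize (H _ _ _ Hy).
  apply clo_least; [apply (proj2_sig Y)|].
  intros e m w [b [f [k [Hf [-> Hk]]]]]. exact (ex_le_inv G _ _ _ _ _ (HY _ _ Hf) _ _ _ Hk).
Qed.

Lemma IFrame_geom : geometric IFrame.
Proof.
  intros d e h V S HS HK. apply KLI_intro. cbn [projT1 projT2]. intros d' g y Hy.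
  apply (Iforall_counit h).
  refine (KLI_le IFrame _ S HK _ _ _ _ _ _ Hy); [apply (Iforall_ideal J HJ), clo_ideal|].
  intros e0 m w [b [f [k [Hf [-> Hk]]]]] e' m' n w' Em Hw'. apply clo_incl.
  set (Ub := Imap (cmp k n) (projT2 b : Icar J _)).
  assert (Hp : Ile Ub (Imap m' (Imap h V))).
  { intros j u v Hv. simpl in Hv |- *. rewrite cmp_assoc, Em, <- !cmp_assoc.
    generalize (proj2_sig f _ _ _ Hv). simpl. rewrite <- !cmp_assoc. auto. }
  set (g' := exist _ m' Hp : @Hom (Groth (IDoc J)) (existT (dob (IDoc J)) e' Ub)
                                (existT (dob (IDoc J)) e (dmap (IDoc J) h V))).
  exists (existT (dob (IDoc J)) e' Ub), g', (idm e'). split; [|split].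
  - set (iota := exist (fun g0 => Ile Ub (Imap g0 (projT2 b : Icar J _))) (cmp k n)
                   (fun _ _ _ H0 => H0)
          : @Hom (Groth (IDoc J)) (existT (dob (IDoc J)) e' Ub) b).
    assert (E : cmp f iota = cmp (hlift (IDoc J) h V) g').
    { apply groth_hom_eq. simpl. rewrite Em, cmp_assoc. reflexivity. }
    unfold pullS. rewrite <- E. apply HS, Hf.
  - symmetry; apply cmp_idr.
  - simpl. rewrite cmp_idr. exact (Icar_down J _ _ _ _ Hk _ _ _ Hw').
Qed.

Definition IGeom : GeomStr (IDoc J) := {| gs_frame := IFrame; gs_geom := IFrame_geom |}.

End IFrame.

Section Unit.
Context {C : Cat} {P : Doctrine C} (J : CoverT (Groth P)) (HJ : is_topology J).

Lemma eta_mono c (x y : dob P c) : dle P x y -> Ile (eta J c x) (eta J c y).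
Proof.
  intros H. apply (eta_least J); [apply (proj2_sig (eta J c y))|].
  intros e g w Hw. apply eta_incl. eapply dle_trans; [exact Hw|]. apply dmap_mono, H.
Qed.

Lemma eta_nat c d (f : Hom d c) (x : dob P c) : eta J d (dmap P f x) = Imap f (eta J c x).
Proof.
  apply (Iext J). intros e g y. split.
  - revert e g y. apply (eta_least J); [apply (proj2_sig (Imap f (eta J c x)))|].
    intros e0 g0 z Hz. apply eta_incl. unfold principal. rewrite dmap_cmp. exact Hz.
  - intro H. apply (Iforall_counit f).
    refine (eta_least J _ _ (Iforall_ideal J HJ f _ (proj2_sig (eta J d (dmap P f x)))) _
              _ _ _ H).
    intros e1 k1 w1 Hw1 e' m n w' Em Hw'. apply eta_incl. unfold principal.
    rewrite <- dmap_cmp, Em, dmap_cmp. eapply dle_trans; [exact Hw'|]. apply dmap_mono, Hw1.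
Qed.

Lemma eta_nat_mono : nat_mono P (IDoc J) (idF C) (eta J).
Proof. split; [apply eta_mono|]. intros c d f x. apply eta_nat. Qed.

Lemma eta_in c (x : dob P c) : proj1_sig (eta J c x) c (idm c) x.
Proof. apply eta_incl. unfold principal. rewrite dmap_id. apply dle_refl. Qed.

Lemma eta_below c d (f : Hom d c) (x : dob P d) (S : Icar J c) :
  proj1_sig S d f x -> Ile (eta J d x) (Imap f S).
Proof.
  intros H. apply (eta_least J); [apply (proj2_sig (Imap f S))|].
  intros e0 g0 z Hz. exact (Icar_down J S _ _ _ H _ _ _ Hz).
Qed.

Definition points {c : C} (T : IdPred P c) : Type :=
  {e : C & {f : Hom e c & {y : dob P e | T e f y}}}.

Definition point_dom {c : C} {T : IdPred P c} (i : points T) : Groth (IDoc J) :=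
  existT (dob (IDoc J)) (projT1 i) (eta J (projT1 i) (proj1_sig (projT2 (projT2 i)))).

Definition point_arr {c : C} (S : Icar J c) {T : IdPred P c} (HTS : subpred T (proj1_sig S))
  (i : points T) : @Hom (Groth (IDoc J)) (point_dom i) (existT (dob (IDoc J)) c S) :=
  exist _ (projT1 (projT2 i))
    (eta_below _ _ _ _ _ (HTS _ _ _ (proj2_sig (projT2 (projT2 i))))).

Section UnitSite.
Variable GI : OpenFrameDoc (IDoc J).

Lemma points_cover c (S : Icar J c) (T : IdPred P c) (HTS : subpred T (proj1_sig S)) :
  subpred (proj1_sig S) (clo J T) ->
  KL GI (existT (dob (IDoc J)) c S) (gen point_dom (point_arr S HTS)).
Proof.
  intros HST. apply KLI_intro. cbn [projT1 projT2]. intros d f y Hy.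
  refine (clo_least J _ _ (clo_ideal J _) _ _ _ _ (HST _ _ _ Hy)).
  intros e g z Hz. apply clo_incl.
  set (i := existT _ e (existT _ g (exist _ z Hz)) : points T).
  exists (point_dom i), (point_arr S HTS i), (idm e). split; [|split].
  - exists i, (idm _). symmetry; apply cmp_idr.
  - symmetry; apply cmp_idr.
  - apply eta_in.
Qed.

Lemma all_points_cover c (S : Icar J c) :
  KL GI (existT (dob (IDoc J)) c S)
    (gen point_dom (point_arr S (fun _ _ _ H => H))).
Proof. apply points_cover, clo_incl. Qed.

Let etaG := groth_pf eta_nat_mono.

(* Covers: a J-cover of (c,x) generates eta x by
   locality of ideals.  Cover image, spans and equalizers: an ideal is covered by
   eta-images of suitable sets of its elements, found with generated_below_eta. *)
Lemma eta_site_covers (X : Groth P) (S : SieveT X) : J X S ->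
  covers (KL GI) (pobj etaG X)
    (fun i : {b : Groth P & {f : Hom b X | S b f}} => pobj etaG (projT1 i))
    (fun i => pmap etaG (proj1_sig (projT2 i))).
Proof.
  destruct X as [c x]. intros HS. apply KLI_intro. cbn [projT1 projT2].
  apply (eta_least J); [apply clo_ideal|]. intros e g0 z Hz.
  set (garr := exist (fun g1 => dle P z (dmap P g1 x)) g0 Hz
         : @Hom (Groth P) (existT (dob P) e z) (existT (dob P) c x)).
  apply (ideal_local J HJ _ (clo_ideal J _) e g0 z (pullS S garr)); [apply (J_pull J HJ), HS|].
  intros b k Hk. apply clo_incl.
  exists (pobj etaG b), (pmap etaG (cmp garr k)), (idm _). split; [|split].
  - exists (existT _ b (exist _ (cmp garr k) Hk)), (idm _). symmetry; apply cmp_idr.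
  - simpl. rewrite cmp_idr. reflexivity.
  - apply eta_in.
Qed.

Lemma eta_site_cover_image (X : Groth (IDoc J)) :
  covered_by (KL GI) X (fun Z _ => exists c, inhabited (Hom Z (pobj etaG c))).
Proof.
  destruct X as [c S].
  exists (points (proj1_sig S)), point_dom, (point_arr S (fun _ _ _ H => H)).
  split; [apply all_points_cover|].
  intros [e [f [y Hy]]]. exists (existT (dob P) e y). constructor. exact (idm _).
Qed.

Lemma eta_site_spans (X1 X2 : Groth P) (Y : Groth (IDoc J))
  (g1 : Hom Y (pobj etaG X1)) (g2 : Hom Y (pobj etaG X2)) :
  covered_by (KL GI) Y (fun Z g =>
    exists (X : Groth P) (f1 : Hom X X1) (f2 : Hom X X2) (k : Hom Z (pobj etaG X)),
      cmp (pmap etaG f1) k = cmp g1 g /\ cmp (pmap etaG f2) k = cmp g2 g).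
Proof.
  destruct X1 as [c1 x1], X2 as [c2 x2], Y as [d S].
  set (T1 := fun e (h : Hom e d) y =>
               proj1_sig S e h y /\ dle P y (dmap P (cmp (proj1_sig g1) h) x1)).
  set (T12 := fun e (h : Hom e d) y => T1 e h y /\ dle P y (dmap P (cmp (proj1_sig g2) h) x2)).
  assert (HTS : subpred T12 (proj1_sig S)) by (intros e h y [[H _] _]; exact H).
  assert (dT1 : down T1).
  { intros e h y [H1 H2] e' g y' Hy'. split; [exact (Icar_down J S _ _ _ H1 _ _ _ Hy')|].
    rewrite cmp_assoc, dmap_cmp. eapply dle_trans; [exact Hy'|]. apply dmap_mono, H2. }
  exists (points T12), point_dom, (point_arr S HTS). split.
  - apply points_cover. intros e h y Hy.
    refine (clo_least J _ _ (clo_ideal J _) _ _ _ _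
              (generated_below_eta J HJ _ (proj1_sig g1) x1 (Icar_down J S)
                 (fun e0 h0 y0 H0 => proj2_sig g1 _ _ _ H0) _ _ _ Hy)).
    intros e0 h0 y0 H0.
    refine (clo_least J _ _ (clo_ideal J _) _ _ _ _
              (generated_below_eta J HJ _ (proj1_sig g2) x2 dT1
                 (fun e1 h1 y1 H3 => proj2_sig g2 _ _ _ (proj1 H3)) _ _ _ H0)).
    apply clo_incl.
  - intros [e [h [y [[Hy1 Hy2] Hy3]]]].
    exists (existT (dob P) e y),
      (exist _ (cmp (proj1_sig g1) h) Hy2), (exist _ (cmp (proj1_sig g2) h) Hy3), (idm _).
    split; apply groth_hom_eq; apply cmp_idr.
Qed.

Lemma eta_site_equalizers (X1 X2 : Groth P) (f1 f2 : Hom X1 X2) (Y : Groth (IDoc J))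
  (g : Hom Y (pobj etaG X1)) :
  cmp (pmap etaG f1) g = cmp (pmap etaG f2) g ->
  covered_by (KL GI) Y (fun Z g' =>
    exists (X : Groth P) (e : Hom X X1) (k : Hom Z (pobj etaG X)),
      cmp f1 e = cmp f2 e /\ cmp (pmap etaG e) k = cmp g g').
Proof.
  destruct X1 as [c1 x1], Y as [d S]. intro Eg.
  set (T1 := fun e (h : Hom e d) y =>
               proj1_sig S e h y /\ dle P y (dmap P (cmp (proj1_sig g) h) x1)).
  assert (HTS : subpred T1 (proj1_sig S)) by (intros e h y [H _]; exact H).
  exists (points T1), point_dom, (point_arr S HTS). split.
  - apply points_cover. intros e h y Hy.
    exact (generated_below_eta J HJ _ (proj1_sig g) x1 (Icar_down J S)
             (fun e0 h0 y0 H0 => proj2_sig g _ _ _ H0) _ _ _ Hy).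
  - intros [e [h [y [Hy1 Hy2]]]].
    exists (existT (dob P) e y), (exist _ (cmp (proj1_sig g) h) Hy2), (idm _).
    apply (f_equal (@proj1_sig _ _)) in Eg. simpl in Eg.
    split; apply groth_hom_eq; simpl.
    + rewrite !cmp_assoc, Eg. reflexivity.
    + apply cmp_idr.
Qed.

Lemma eta_site : is_site_morphism J (KL GI) etaG.
Proof.
  split; [exact eta_site_covers|split; [exact eta_site_cover_image|split]].
  - exact eta_site_spans.
  - exact eta_site_equalizers.
Qed.

Lemma eta_1cell : is_1cell J (KL GI) (idF C) (eta J).
Proof. split; [apply idF_flat|]. exists eta_nat_mono. exact eta_site. Qed.

End UnitSite.
End Unit.

Lemma precomp_eta {C : Cat} {P : Doctrine C} (J : CoverT (Groth P)) (HJ : is_topology J)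
  (GI : OpenFrameDoc (IDoc J)) {D : Cat} {L : Doctrine D} (GL : OpenFrameDoc L)
  (Hgeo : geometric GL) (F : Functor C D) (b : forall c, dob (IDoc J) c -> dob L (F c)) :
  is_1cell (KL GI) (KL GL) F b -> is_1cell J (KL GL) F (fun c x => b c (eta J c x)).
Proof.
  intros [Hflat [Hb Hsite]]. split; [exact Hflat|].
  assert (Hn : nat_mono P L F (fun c x => b c (eta J c x))).
  { destruct Hb as [Hm Hnat]. split.
    - intros c x y H. apply Hm, eta_mono, H.
    - intros c d f x. rewrite (eta_nat J HJ). apply Hnat. }
  exists Hn.
  assert (Hc := comp_site J (KL GI) (KL GL) _ _ (KL_coverage_laws GL Hgeo) (groth_pf_cmp Hb)
                  (eta_site J HJ GI) Hsite).
  eapply site_morphism_ext; [|exact Hc].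
  intros u v f. apply groth_hom_eq. reflexivity.
Qed.

Section Extension.
Context {C : Cat} {P : Doctrine C} (J : CoverT (Groth P)) (GI : OpenFrameDoc (IDoc J))
  {D : Cat} {L : Doctrine D} (GL : OpenFrameDoc L) (Hgeo : geometric GL)
  (F : Functor C D) (a : forall c, dob P c -> dob L (F c)) (Ha : is_1cell J (KL GL) F a).

Definition bext c (S : dob (IDoc J) c) : dob L (F c) :=
  of_join GL (F c) (fun Z => exists e (f : Hom e c) y,
     proj1_sig (S : Icar J c) e f y /\ Z = of_ex GL (fmap F f) (a e y)).

Definition below_ext c (Z : dob L (F c)) : IdPred P c :=
  fun e f y => dle L (of_ex GL (fmap F f) (a e y)) Z.

Lemma a_mono c (x y : dob P c) : dle P x y -> dle L (a c x) (a c y).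
Proof. destruct Ha as [_ [[Hm _] _]]. apply Hm. Qed.

Lemma a_nat c d (f : Hom d c) x : a d (dmap P f x) = dmap L (fmap F f) (a c x).
Proof. destruct Ha as [_ [[_ Hn] _]]. apply Hn. Qed.

Lemma a_arrow (u v : Groth P) (m : @Hom (Groth P) u v) :
  dle L (of_ex GL (fmap F (proj1_sig m)) (a _ (projT2 u))) (a _ (projT2 v)).
Proof. apply (ex_le GL). rewrite <- a_nat. apply a_mono, (proj2_sig m). Qed.

(* below_ext is an ideal: its locality is the cover preservation of F ⋊ a. *)
Lemma below_ext_ideal c Z : is_ideal J (below_ext c Z).
Proof.
  split.
  - intros d f x H e g y Hy. unfold below_ext in *. rewrite fmap_cmp, (ex_cmp GL).
    eapply dle_trans; [|exact H]. apply (ex_mono GL), (ex_le GL).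
    rewrite <- a_nat. apply a_mono, Hy.
  - intros d f x [I [dom [h [Hc Hi]]]]. unfold below_ext. apply (ex_le GL).
    destruct Ha as [_ [Hn [Hcov _]]].
    apply (KL_le GL _ _ (Hcov _ _ Hc)).
    intros b g [[b0 [w [i [m Hw]]]] [k ->]]. simpl in Hw. subst w.
    apply (ex_le GL). rewrite <- dmap_cmp. apply (ex_le_inv GL). simpl.
    rewrite !fmap_cmp, !(ex_cmp GL).
    eapply dle_trans; [|exact (Hi i)]. unfold below_ext. rewrite fmap_cmp, (ex_cmp GL).
    apply (ex_mono GL), (ex_mono GL).
    eapply dle_trans; [apply (ex_mono GL), (arrow_ex GL _ _ k)|]. apply (a_arrow _ _ m).
Qed.

Lemma bext_le c (S : dob (IDoc J) c) Z :
  dle L (bext c S) Z <-> subpred (proj1_sig (S : Icar J c)) (below_ext c Z).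
Proof.
  split.
  - intros H e f y Hy. eapply dle_trans; [|exact H]. apply (of_join_ub _ GL). exists e, f, y; auto.
  - intros H. apply (of_join_lub _ GL). intros x [e [f [y [Hy ->]]]]. apply H, Hy.
Qed.

Lemma bext_ub c (S : dob (IDoc J) c) e f y :
  proj1_sig (S : Icar J c) e f y -> dle L (of_ex GL (fmap F f) (a e y)) (bext c S).
Proof. intro H. apply (of_join_ub _ GL). exists e, f, y; auto. Qed.

Lemma bext_ub_along c (S : dob (IDoc J) c) e (f : Hom e c) y b (w : Hom b (F e)) U :
  proj1_sig (S : Icar J c) e f y -> dle L U (dmap L w (a e y)) ->
  dle L (of_ex GL (cmp (fmap F f) w) U) (bext c S).
Proof.
  intros Hy HU. rewrite (ex_cmp GL). eapply dle_trans; [|apply (bext_ub _ _ _ _ _ Hy)].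
  apply (ex_mono GL), (ex_le GL), HU.
Qed.

Lemma bext_eta c x : bext c (eta J c x) = a c x.
Proof.
  apply (of_antisym _ GL).
  - apply bext_le, (eta_least J); [apply below_ext_ideal|].
    intros e g z Hz. apply (ex_le GL). rewrite <- a_nat. apply a_mono, Hz.
  - generalize (bext_ub c (eta J c x) c (idm c) x (eta_in J c x)).
    rewrite fmap_id, (ex_id GL). auto.
Qed.

Lemma bext_mono c (S T : dob (IDoc J) c) : dle (IDoc J) S T -> dle L (bext c S) (bext c T).
Proof. intros H. apply bext_le. intros e f y Hy. apply bext_ub, H, Hy. Qed.

(* The nontrivial half of naturality, a Beck-Chevalley property: reindexing the
   generator ∃_{F f} a(y) along F h stays below bext (h^* S).  Geometricity
   reduces it to arrows g, k with F h o g = F f o k, and flatness of F turns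
   such a square into a square of C. *)
Lemma bext_reindex_point c d (h : Hom d c) (S : dob (IDoc J) c) e (f : Hom e c) y :
  proj1_sig (S : Icar J c) e f y ->
  dle L (dmap L (fmap F h) (of_ex GL (fmap F f) (a e y))) (bext d (dmap (IDoc J) h S)).
Proof.
  intro Hy.
  set (X := existT (dob L) (F c) (of_ex GL (fmap F f) (a e y)) : Groth L).
  set (iota := exist (fun g0 => dle L (a e y) (dmap L g0 (of_ex GL (fmap F f) (a e y))))
                 (fmap F f) (ex_le_inv GL _ _ _ _ _ (dle_refl _ _ _ _))
               : @Hom (Groth L) (existT (dob L) (F e) (a e y)) X).
  set (R := @gen (Groth L) X unit (fun _ => existT (dob L) (F e) (a e y) : Groth L) (fun _ => iota)).
  assert (HKR : KL GL X R).
  { apply KL_intro. intros Y HY. exact (HY _ iota (ex_intro _ tt (ex_intro _ (idm _)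
                                           (eq_sym (cmp_idr _ _ _ _))))). }
  apply (KL_le GL _ _ (Hgeo (F c) (F d) (fmap F h) _ R (gen_is_sieve _ _) HKR)).
  intros [b' U] g [[] [k Hk]]. cbn [projT1 projT2].
  apply (f_equal (@proj1_sig _ _)) in Hk. simpl in Hk.
  destruct (flat_square F (proj1 Ha) c d e h f b' (proj1_sig g) (proj1_sig k) Hk)
    as [c' [u [v [w [Euv [Eu Ev]]]]]].
  apply (dle_trans _ _ _ _ (of_ex GL (cmp (fmap F u) w) U)); [rewrite Eu; apply dle_refl|].
  apply (bext_ub_along _ _ _ _ (dmap P v y)).
  - simpl. rewrite Euv. apply (Icar_down J S _ _ _ Hy), dle_refl.
  - rewrite a_nat, <- dmap_cmp, Ev. exact (proj2_sig k).
Qed.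

Lemma bext_nat c d (h : Hom d c) (S : dob (IDoc J) c) :
  bext d (dmap (IDoc J) h S) = dmap L (fmap F h) (bext c S).
Proof.
  apply (of_antisym _ GL).
  - apply bext_le. intros e g y Hy. apply (ex_le GL). rewrite <- dmap_cmp.
    apply (ex_le_inv GL). rewrite <- fmap_cmp. apply bext_ub, Hy.
  - unfold bext at 1. rewrite (of_map_join _ GL). apply (of_join_lub _ GL).
    intros z [z0 [[e [f [y [Hy ->]]]] ->]]. apply bext_reindex_point, Hy.
Qed.

Lemma bext_nat_mono : nat_mono (IDoc J) L F bext.
Proof. split; [apply bext_mono|]. intros c d f x. apply bext_nat. Qed.

Let bextG := groth_pf bext_nat_mono.

Definition retarget (X : Groth L) c x (k : @Hom (Groth L) X (existT (dob L) (F c) (a c x))) :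
  @Hom (Groth L) X (pobj bextG (existT (dob (IDoc J)) c (eta J c x))) :=
  exist _ (proj1_sig k)
    (eq_ind_r (fun t => dle L (projT2 X) (dmap L (proj1_sig k) t)) (proj2_sig k) (bext_eta c x)).

Definition ext_point_dom c (S : Icar J c) (i : points (proj1_sig S)) : Groth L :=
  existT (dob L) (F (projT1 i)) (a _ (proj1_sig (projT2 (projT2 i)))).

Definition ext_point_arr c (S : Icar J c) (i : points (proj1_sig S)) :
  @Hom (Groth L) (ext_point_dom c S i) (existT (dob L) (F c) (bext c S)) :=
  exist _ (fmap F (projT1 (projT2 i)))
    (ex_le_inv GL _ _ _ _ _ (bext_ub c S _ _ _ (proj2_sig (projT2 (projT2 i))))).

Lemma ext_points_cover c (S : Icar J c) :
  KL GL (existT (dob L) (F c) (bext c S)) (gen (ext_point_dom c S) (ext_point_arr c S)).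
Proof.
  apply KL_intro. intros Y HY. cbn [projT1 projT2]. apply bext_le. intros e f y Hy.
  set (i := existT _ e (existT _ f (exist _ y Hy)) : points (proj1_sig S)).
  exact (HY _ (ext_point_arr c S i) (ex_intro _ i (ex_intro _ (idm _) (eq_sym (cmp_idr _ _ _ _))))).
Qed.

Lemma bext_site_covers (X : Groth (IDoc J)) (R : SieveT X) : KL GI X R ->
  covers (KL GL) (pobj bextG X)
    (fun i : {b : Groth (IDoc J) & {f : Hom b X | R b f}} => pobj bextG (projT1 i))
    (fun i => pmap bextG (proj1_sig (projT2 i))).
Proof.
  destruct X as [c V]. intros HR. apply KL_intro. intros Y HY. cbn [projT1 projT2].
  apply bext_le. refine (KLI_le J GI _ R HR (below_ext c Y) (below_ext_ideal c Y) _).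
  intros e0 m w [b [g [k [Hg [-> Hk]]]]].
  unfold below_ext. rewrite fmap_cmp, (ex_cmp GL).
  eapply dle_trans; [apply (ex_mono GL), (bext_ub _ _ _ _ _ Hk)|].
  exact (HY _ (pmap bextG g)
           (ex_intro _ (existT _ b (exist _ g Hg)) (ex_intro _ (idm _) (eq_sym (cmp_idr _ _ _ _))))).
Qed.

Lemma bext_site_cover_image (Y : Groth L) :
  covered_by (KL GL) Y (fun Z _ => exists X, inhabited (Hom Z (pobj bextG X))).
Proof.
  destruct (proj2 Ha) as [Hn [_ [Himg _]]].
  destruct (Himg Y) as [I [dom [h [Hc Hd]]]]. exists I, dom, h. split; [exact Hc|].
  intro i. destruct (Hd i) as [[c x] [k]].
  exists (existT (dob (IDoc J)) c (eta J c x)). constructor. exact (retarget _ c x k).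
Qed.

(* Spans into (F c1, bext S1) and (F c2, bext S2) are resolved locally at points
   of S1 and S2, where the span clause of F ⋊ a applies. *)
Lemma bext_site_spans (X1 X2 : Groth (IDoc J)) (Y : Groth L)
  (g1 : Hom Y (pobj bextG X1)) (g2 : Hom Y (pobj bextG X2)) :
  covered_by (KL GL) Y (fun Z g =>
    exists (X : Groth (IDoc J)) (f1 : Hom X X1) (f2 : Hom X X2) (k : Hom Z (pobj bextG X)),
      cmp (pmap bextG f1) k = cmp g1 g /\ cmp (pmap bextG f2) k = cmp g2 g).
Proof.
  destruct (KL_coverage_laws GL Hgeo) as [KM [KS KT]].
  destruct (proj2 Ha) as [Hn [_ [_ [Hspan _]]]].
  destruct X1 as [c1 S1], X2 as [c2 S2].
  apply (covering_family _ (KL_coverage_laws GL Hgeo)).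
  apply (KT _ _ _ (KS _ _ _ g1 (gen_is_sieve _ _) (ext_points_cover c1 S1))).
  intros b f' [i1 [k1 Ek1]].
  apply (KT _ _ _ (KS _ _ _ (cmp g2 f') (gen_is_sieve _ _) (ext_points_cover c2 S2))).
  intros b' f'' [i2 [k2 Ek2]].
  destruct i1 as [e1 [h1 [y1 Hy1]]], i2 as [e2 [h2 [y2 Hy2]]].
  destruct (Hspan (existT (dob P) e1 y1) (existT (dob P) e2 y2) b' (cmp k1 f'') k2)
    as [I [dom [h [Hc Hd]]]].
  apply (KM _ _ _ Hc). intros z g [i [m ->]].
  destruct (Hd i) as [[c z0] [u1 [u2 [k [Eu1 Eu2]]]]].
  apply (f_equal (@proj1_sig _ _)) in Ek1, Ek2, Eu1, Eu2. simpl in Ek1, Ek2, Eu1, Eu2.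
  exists (existT (dob (IDoc J)) c (eta J c z0)),
    (exist _ (cmp h1 (proj1_sig u1)) (eta_below J _ _ _ _ _ (Icar_down J S1 _ _ _ Hy1 _ _ _ (proj2_sig u1)))),
    (exist _ (cmp h2 (proj1_sig u2)) (eta_below J _ _ _ _ _ (Icar_down J S2 _ _ _ Hy2 _ _ _ (proj2_sig u2)))),
    (retarget _ c z0 (cmp k m)).
  split; apply groth_hom_eq; simpl.
  - rewrite fmap_cmp, !cmp_assoc, <- (cmp_assoc _ _ _ _ _ (fmap F h1)), Eu1.
    rewrite !cmp_assoc, Ek1. reflexivity.
  - rewrite fmap_cmp, !cmp_assoc, <- (cmp_assoc _ _ _ _ _ (fmap F h2)), Eu2.
    rewrite <- !cmp_assoc, !cmp_assoc, Ek2, <- !cmp_assoc. reflexivity.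
Qed.

(* Arrows of I ⋊ I(P,J) identified after g are equalised, locally at the points of
   the domain ideal, by flatness of F. *)
Lemma bext_site_equalizers (X1 X2 : Groth (IDoc J)) (f1 f2 : Hom X1 X2) (Y : Groth L)
  (g : Hom Y (pobj bextG X1)) :
  cmp (pmap bextG f1) g = cmp (pmap bextG f2) g ->
  covered_by (KL GL) Y (fun Z g' =>
    exists (X : Groth (IDoc J)) (e : Hom X X1) (k : Hom Z (pobj bextG X)),
      cmp f1 e = cmp f2 e /\ cmp (pmap bextG e) k = cmp g g').
Proof.
  intro Eg. destruct (KL_coverage_laws GL Hgeo) as [KM [KS KT]].
  destruct X1 as [c1 S1].
  apply (covering_family _ (KL_coverage_laws GL Hgeo)).
  apply (KT _ _ _ (KS _ _ _ g (gen_is_sieve _ _) (ext_points_cover c1 S1))).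
  intros b f' [[e [h [y Hy]]] [k1 Ek1]].
  apply (f_equal (@proj1_sig _ _)) in Ek1, Eg. simpl in Ek1, Eg.
  assert (Eq : cmp (fmap F (cmp (proj1_sig f1) h)) (proj1_sig k1) =
               cmp (fmap F (cmp (proj1_sig f2) h)) (proj1_sig k1)).
  { rewrite !fmap_cmp, <- !cmp_assoc.
    transitivity (cmp (fmap F (proj1_sig f1)) (cmp (proj1_sig g) (proj1_sig f'))).
    { f_equal. symmetry. exact Ek1. }
    transitivity (cmp (fmap F (proj1_sig f2)) (cmp (proj1_sig g) (proj1_sig f'))).
    { rewrite !cmp_assoc. f_equal. exact Eg. }
    f_equal. exact Ek1. }
  destruct (flat_equalize F (proj1 Ha) _ _ _ _ _ _ Eq) as [c' [e' [kk [E3 E4]]]].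
  apply (KM _ _ _ (KL_maximal GL b)). intros z g0 _.
  assert (Hk : dle L (projT2 z) (dmap L (cmp kk (proj1_sig g0)) (a c' (dmap P e' y)))).
  { rewrite a_nat, <- dmap_cmp, cmp_assoc, E4.
    rewrite dmap_cmp. eapply dle_trans; [exact (proj2_sig g0)|]. apply dmap_mono, (proj2_sig k1). }
  exists (existT (dob (IDoc J)) c' (eta J c' (dmap P e' y))),
    (exist _ (cmp h e') (eta_below J _ _ _ _ _ (Icar_down J S1 _ _ _ Hy _ _ _ (dle_refl _ _ _ _)))),
    (retarget _ c' (dmap P e' y) (exist _ (cmp kk (proj1_sig g0)) Hk)).
  split; apply groth_hom_eq; simpl.
  - rewrite !cmp_assoc. exact E3.
  - rewrite fmap_cmp.
    transitivity (cmp (fmap F h) (cmp (proj1_sig k1) (proj1_sig g0))).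
    { rewrite <- cmp_assoc. f_equal. rewrite cmp_assoc, E4. reflexivity. }
    rewrite cmp_assoc. transitivity (cmp (cmp (proj1_sig g) (proj1_sig f')) (proj1_sig g0)).
    { f_equal. symmetry. exact Ek1. }
    symmetry. apply cmp_assoc.
Qed.

Lemma bext_1cell : is_1cell (KL GI) (KL GL) F bext.
Proof.
  split; [exact (proj1 Ha)|]. exists bext_nat_mono.
  split; [exact bext_site_covers|split; [exact bext_site_cover_image|split]].
  - exact bext_site_spans.
  - exact bext_site_equalizers.
Qed.

(* Uniqueness: a 1-cell b' agreeing with a on eta-images agrees with bext, since
   each (c,S) is covered by eta-images and b' preserves that cover. *)
Lemma bext_unique (b' : forall c, dob (IDoc J) c -> dob L (F c)) :
  is_1cell (KL GI) (KL GL) F b' -> (forall c x, b' c (eta J c x) = a c x) ->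
  forall c S, b' c S = bext c S.
Proof.
  intros [_ [[Hm' Hn'] Hs']] Heq c S. apply (of_antisym _ GL).
  - assert (Hc := proj1 Hs' _ _ (all_points_cover J GI c S)).
    apply (KL_le GL _ _ Hc). intros b g [[bb [g1 [i [m Hg1]]]] [k ->]]. simpl in Hg1. subst g1.
    destruct i as [e [f [y Hy]]]. simpl.
    rewrite (ex_cmp GL). eapply dle_trans; [apply (ex_mono GL), (arrow_ex GL _ _ k)|].
    simpl. rewrite fmap_cmp. apply (bext_ub_along _ _ _ _ _ _ _ _ Hy).
    rewrite <- Heq, <- Hn'. apply Hm', (proj2_sig m).
  - apply bext_le. intros e f y Hy. unfold below_ext. apply (ex_le GL).
    rewrite <- Heq, <- Hn'. apply Hm', eta_below, Hy.
Qed.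

End Extension.

Lemma unit_universal {C : Cat} {P : Doctrine C} (J : CoverT (Groth P))
  (GI : OpenFrameDoc (IDoc J)) {D : Cat} {L : Doctrine D} (GL : OpenFrameDoc L)
  (Hgeo : geometric GL) (F : Functor C D) (a : forall c, dob P c -> dob L (F c)) :
  is_1cell J (KL GL) F a ->
  exists b : forall c, dob (IDoc J) c -> dob L (F c),
    (is_1cell (KL GI) (KL GL) F b /\ forall c x, b c (eta J c x) = a c x) /\
    forall b' : forall c, dob (IDoc J) c -> dob L (F c),
      is_1cell (KL GI) (KL GL) F b' ->
      (forall c x, b' c (eta J c x) = a c x) ->
      forall c S, b' c S = b c S.
Proof.
  intro Ha. exists (bext J GL F a). split; [split|].
  - exact (bext_1cell J GI GL Hgeo F a Ha).
  - exact (bext_eta J GL F a Ha).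
  - exact (bext_unique J GI GL F a).
Qed.

(* On 2-cells the universal property is full: a 2-cell between extensions can be
   tested on eta-images, since the extension b is bext of its restriction. *)
Lemma unit_2cells {C : Cat} {P : Doctrine C} (J : CoverT (Groth P))
  (GI : OpenFrameDoc (IDoc J)) {D : Cat} {L : Doctrine D} (GL : OpenFrameDoc L)
  (Hgeo : geometric GL) (F F' : Functor C D)
  (b : forall c, dob (IDoc J) c -> dob L (F c)) (b' : forall c, dob (IDoc J) c -> dob L (F' c)) :
  is_1cell (KL GI) (KL GL) F b -> is_1cell (KL GI) (KL GL) F' b' ->
  forall alpha : NatTrans F F',
    is_2cell b b' alpha <->
    is_2cell (fun c x => b c (eta J c x)) (fun c x => b' c (eta J c x)) alpha.
Proof.
  intros Hb Hb' alpha. split; [intros H c x; apply H|].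
  intros H c S. destruct Hb' as [_ [[Hm' Hn'] _]].
  rewrite (bext_unique J GI GL F (fun c x => b c (eta J c x)) b Hb (fun _ _ => eq_refl) c S).
  apply bext_le. intros e f y Hy. unfold below_ext. apply (ex_le GL).
  rewrite <- dmap_cmp, (nt_nat _ _ _ _ alpha), dmap_cmp, <- Hn'.
  eapply dle_trans; [apply H|]. apply dmap_mono, Hm', eta_below, Hy.
Qed.

Lemma eta_after_1cell {C : Cat} {P : Doctrine C} (J : CoverT (Groth P)) {D : Cat}
  {Q : Doctrine D} (K : CoverT (Groth Q)) (HK : is_topology K) (GQ : GeomStr (IDoc K))
  (F : Functor C D) (a : forall c, dob P c -> dob Q (F c)) :
  is_1cell J K F a -> is_1cell J (KL GQ) F (fun c x => eta K (F c) (a c x)).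
Proof.
  intros [Hflat [Ha Hs]]. split; [exact Hflat|].
  assert (Hn : nat_mono P (IDoc K) F (fun c x => eta K (F c) (a c x))).
  { destruct Ha as [Hm Hnat]. split.
    - intros c x y H. apply eta_mono, Hm, H.
    - intros c d f x. rewrite Hnat. apply (eta_nat K HK). }
  exists Hn.
  assert (Hc := comp_site J K (KL GQ) _ _ (KL_coverage_laws GQ (gs_geom _ GQ))
                  (groth_pf_cmp (eta_nat_mono K HK)) Hs (eta_site K HK GQ)).
  eapply site_morphism_ext; [|exact Hc].
  intros u v f. apply groth_hom_eq. reflexivity.
Qed.

Lemma I_on_2cells {C : Cat} {P : Doctrine C} (J : CoverT (Groth P))
  (GI : OpenFrameDoc (IDoc J)) {D : Cat} {Q : Doctrine D} (K : CoverT (Groth Q))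
  (HK : is_topology K) (GQ : GeomStr (IDoc K)) (F F' : Functor C D)
  (a : forall c, dob P c -> dob Q (F c)) (a' : forall c, dob P c -> dob Q (F' c))
  (fa : forall c, dob (IDoc J) c -> dob (IDoc K) (F c))
  (fa' : forall c, dob (IDoc J) c -> dob (IDoc K) (F' c)) (alpha : NatTrans F F') :
  is_1cell (KL GI) (KL GQ) F fa -> is_1cell (KL GI) (KL GQ) F' fa' ->
  (forall c x, fa c (eta J c x) = eta K (F c) (a c x)) ->
  (forall c x, fa' c (eta J c x) = eta K (F' c) (a' c x)) ->
  is_2cell a a' alpha -> is_2cell fa fa' alpha.
Proof.
  intros Hfa Hfa' E E' H2.
  apply (unit_2cells J GI GQ (gs_geom _ GQ) F F' fa fa' Hfa Hfa' alpha). intros c x.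
  cbv beta. rewrite E, E'. eapply dle_trans; [apply eta_mono, H2|].
  rewrite (eta_nat K HK). apply dle_refl.
Qed.

Theorem proposition4p13 (C : Cat) (P : Doctrine C) (J : CoverT (Groth P))
  (HJ : is_topology J) :
  (* I(P,J) is a geometric doctrine *)
  inhabited (GeomStr (IDoc J)) /\
  forall GI : GeomStr (IDoc J),
  (* the unit (id_C, eta) is a 1-cell (P,J) -> (I(P,J), K_I(P,J)) *)
  is_1cell J (KL GI) (idF C) (eta J) /\
  (* Hom_DocSites((P,J),(L,K_L)) ≅ Hom_GeomDoc((I(P,J),K),(L,K_L)) by precomposition *)
  (forall (D : Cat) (L : Doctrine D) (GL : GeomStr L),
     (forall (F : Functor C D) (b : forall c, dob (IDoc J) c -> dob L (F c)),
        is_1cell (KL GI) (KL GL) F b ->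
        is_1cell J (KL GL) F (fun c x => b c (eta J c x))) /\
     (forall (F : Functor C D) (a : forall c, dob P c -> dob L (F c)),
        is_1cell J (KL GL) F a ->
        exists b : forall c, dob (IDoc J) c -> dob L (F c),
          (is_1cell (KL GI) (KL GL) F b /\ forall c x, b c (eta J c x) = a c x) /\
          forall b' : forall c, dob (IDoc J) c -> dob L (F c),
            is_1cell (KL GI) (KL GL) F b' ->
            (forall c x, b' c (eta J c x) = a c x) ->
            forall c S, b' c S = b c S) /\
     (forall (F F' : Functor C D)
             (b : forall c, dob (IDoc J) c -> dob L (F c))
             (b' : forall c, dob (IDoc J) c -> dob L (F' c)),
        is_1cell (KL GI) (KL GL) F b -> is_1cell (KL GI) (KL GL) F' b' ->
        forall alpha : NatTrans F F',
          is_2cell b b' alpha <->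
          is_2cell (fun c x => b c (eta J c x)) (fun c x => b' c (eta J c x)) alpha)) /\
  (* the 2-functor I on 1-cells and 2-cells *)
  (forall (D : Cat) (Q : Doctrine D) (K : CoverT (Groth Q)),
     is_topology K ->
     forall GQ : GeomStr (IDoc K),
     (forall (F : Functor C D) (a : forall c, dob P c -> dob Q (F c)),
        is_1cell J K F a ->
        exists fa : forall c, dob (IDoc J) c -> dob (IDoc K) (F c),
          (is_1cell (KL GI) (KL GQ) F fa /\
           forall c x, fa c (eta J c x) = eta K (F c) (a c x)) /\
          forall fa' : forall c, dob (IDoc J) c -> dob (IDoc K) (F c),
            is_1cell (KL GI) (KL GQ) F fa' ->
            (forall c x, fa' c (eta J c x) = eta K (F c) (a c x)) ->
            forall c S, fa' c S = fa c S) /\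
     (forall (F F' : Functor C D)
             (a : forall c, dob P c -> dob Q (F c))
             (a' : forall c, dob P c -> dob Q (F' c))
             (fa : forall c, dob (IDoc J) c -> dob (IDoc K) (F c))
             (fa' : forall c, dob (IDoc J) c -> dob (IDoc K) (F' c))
             (alpha : NatTrans F F'),
        is_1cell J K F a -> is_1cell J K F' a' ->
        is_1cell (KL GI) (KL GQ) F fa -> is_1cell (KL GI) (KL GQ) F' fa' ->
        (forall c x, fa c (eta J c x) = eta K (F c) (a c x)) ->
        (forall c x, fa' c (eta J c x) = eta K (F' c) (a' c x)) ->
        is_2cell a a' alpha -> is_2cell fa fa' alpha)).
Proof.
  split; [constructor; exact (IGeom J HJ)|].
  intro GI. split; [exact (eta_1cell J HJ GI)|]. split.
  - intros D L GL. split; [|split].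
    + exact (precomp_eta J HJ GI GL (gs_geom _ GL)).
    + exact (unit_universal J GI GL (gs_geom _ GL)).
    + exact (unit_2cells J GI GL (gs_geom _ GL)).
  - intros D Q K HK GQ. split.
    + intros F a Ha.
      exact (unit_universal J GI GQ (gs_geom _ GQ) F _ (eta_after_1cell J K HK GQ F a Ha)).
    + intros F F' a a' fa fa' alpha _ _.
      exact (I_on_2cells J GI K HK GQ F F' a a' fa fa' alpha).
Qed.
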